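(* Let $n\ge1$ and let $\{\mathcal{I},\mathcal{J}\}=\{\mathcal{N},\mathcal{M}\}$. If $\mathrm{cov}_t(\mathcal{I})\ge\mathrm{cof}(\mathcal{I})$, then there exists a linear subspace $H$ of $\mathbb{R}^n$, considered as a vector space over $\mathbb{Q}$, such that $H\in\mathcal{J}\setminus\mathcal{I}$.
   Context: $\mathcal{N}$ is the $\sigma$-ideal of Lebesgue null subsets of $\mathbb{R}^n$, and $\mathcal{M}$ is the $\sigma$-ideal of meager subsets of $\mathbb{R}^n$. For $A,B\subseteq\mathbb{R}^n$ put $A+B=\{a+b:a\in A,b\in B\}$. $\mathrm{cof}(\mathcal{I})=\min\{|\mathcal{F}|:\mathcal{F}\subseteq\mathcal{I},\ \forall A\in\mathcal{I}\ \exists B\in\mathcal{F}\ A\subseteq B\}$. $\mathrm{cov}_t(\mathcal{I})=\min\{|A|:A\subseteq\mathbb{R}^n,\ \exists B\in\mathcal{I}\ (A+B=\mathbb{R}^n)\}$ (the transitive covering number). *)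

From Stdlib Require Import Reals QArith Qreals.
From Stdlib Require Vectors.Fin.
Open Scope R_scope.

Definition pt (n : nat) : Type := Fin.t n -> R.

Definition set_ (n : nat) : Type := pt n -> Prop.

Definition subset_ {n : nat} (A B : set_ n) : Prop := forall x, A x -> B x.

Definition cube {n : nat} (c : pt n) (s : R) : set_ n :=
  fun x => forall i, Rabs (x i - c i) <= s / 2.

Definition null_set (n : nat) (A : set_ n) : Prop :=
  forall eps, 0 < eps ->
    exists (c : nat -> pt n) (s : nat -> R),
      (forall k, 0 <= s k) /\
      (forall x, A x -> exists k, cube (c k) (s k) x) /\
      (forall N, sum_f_R0 (fun k => s k ^ n) N < eps).

(* Open ball (for the sup-norm, which induces the usual topology of R^n). *)
Definition ball {n : nat} (x : pt n) (r : R) : set_ n :=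
  fun y => forall i, Rabs (y i - x i) < r.

Definition nowhere_dense {n : nat} (A : set_ n) : Prop :=
  forall x r, 0 < r ->
    exists y r', 0 < r' /\ subset_ (ball y r') (ball x r) /\
                 (forall z, ball y r' z -> ~ A z).

Definition meager (n : nat) (A : set_ n) : Prop :=
  exists N : nat -> set_ n,
    (forall k, nowhere_dense (N k)) /\
    (forall x, A x -> exists k, N k x).

Definition sum_is_full {n : nat} (A B : set_ n) : Prop :=
  forall x : pt n, exists a b, A a /\ B b /\ forall i, x i = a i + b i.

(* cof(I) <= |T| : there is a T-indexed family of members of I cofinal in I. *)
Definition cof_le_card {n : nat} (I : set_ n -> Prop) (T : Type) : Prop :=
  exists f : T -> set_ n,
    (forall t, I (f t)) /\ (forall C, I C -> exists t, subset_ C (f t)).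

(* cov_t(I) >= cof(I): every A witnessing cov_t (A + B = R^n for some B in I)
   has cardinality at least cof(I). *)
Definition covt_ge_cof {n : nat} (I : set_ n -> Prop) : Prop :=
  forall A : set_ n, (exists B, I B /\ sum_is_full A B) ->
    cof_le_card I {x : pt n | A x}.

Definition Q_subspace {n : nat} (H : set_ n) : Prop :=
  H (fun _ => 0) /\
  (forall x y, H x -> H y -> H (fun i => x i + y i)) /\
  (forall (q : Q) x, H x -> H (fun i => Q2R q * x i)).

(* Fix a cofinal family (B_t) of I-sets indexed by a set of size
   cof(I), well-ordered so that every proper initial segment is "small" (of size
   < cof(I)), and a set Z in J whose complement is in I.  By transfinite
   recursion choose points x_t with
     (a) x_t notin B_t, and
     (b) v + q x_t in Z for every nonzero rational q and every rational
         combination v of earlier points.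
   Such x_t exist: the earlier combinations form a small set S, the bad points
   M = B_t u {y | q y notin Z for some q <> 0} form an I-set, so S + M is not
   all of R^n by cov_t(I) >= cof(I); any y outside S + M works.  The Q-span H of
   all x_t then satisfies H \ {0} ⊆ Z (look at the latest point of a
   combination), so H is in J, and H is not in I because no B_t contains it.

   Cardinals are never named: a set is "small" when it cannot index a cofinal
   family of I-sets.  The recursion runs over formal finite expressions whose
   letters lie in a suitable initial segment P of a well-ordering of the
   subsets of R^n, ordered first by their largest letter. *)

From Stdlib Require Import Reals QArith Qreals ZArith Cantor.
From Stdlib Require Import Lra Lia List ClassicalEpsilon FunctionalExtensionality ProofIrrelevance Classical.
From Stdlib Require FinFun.
From mathcomp Require ssreflect ssrfun ssrbool eqtype ssrnat seq choice boolp wochoice.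

Module WellOrdering.
Import ssreflect ssrbool eqtype boolp.

Lemma in_asbool (T : Type) (A : {classic T} -> Prop) x :
  x \in (fun y : {classic T} => `[< A y >]) <-> A x.
Proof. by split=> [/asboolP | H]; last exact/asboolP. Qed.

Lemma well_order_minimum {T : Type} {R : T -> T -> bool} :
  wochoice.well_order (R : rel {classic T}) ->
  forall A : T -> Prop, (exists x, A x) -> exists z, A z /\ forall x, A x -> R z x.
Proof.
move=> HR A [x Ax].
have [z [[/in_asbool Az Hz] _]] := HR (fun y : {classic T} => `[< A y >]) (ex_intro _ x (proj2 (in_asbool _ _ _) Ax)).
by exists z; split=> // y Ay; apply: Hz; apply/in_asbool.
Qed.

Lemma strict_well_order_exists (T : Type) : exists lt : T -> T -> Prop,
  well_founded lt /\ (forall x y z, lt x y -> lt y z -> lt x z) /\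
  (forall x y, x <> y -> lt x y \/ lt y x).
Proof.
have [R HR] := wochoice.well_ordering_principle (classicType T).
have Hmin := well_order_minimum HR.
have Hrefl : forall x, R x x by move=> x; have [z [-> Hz]] := Hmin (fun w => w = x) (ex_intro _ x Logic.eq_refl); exact: Hz.
have Htot : forall x y, R x y \/ R y x.
  move=> x y; have [z [[->| ->] Hz]] := Hmin (fun w => w = x \/ w = y) (ex_intro _ x (or_introl Logic.eq_refl)).
  - by left; apply: Hz; right.
  - by right; apply: Hz; left.
have Hanti : forall x y, R x y -> R y x -> x = y.
  move=> x y H1 H2.
  have [z [[Hz1 Hz2] Hu]] := HR (fun w : classicType T => `[< w = x \/ w = y >]) (ex_intro _ x (proj2 (in_asbool _ _ _) (or_introl Logic.eq_refl))).
  have Ex : x = z.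
    by symmetry; apply: Hu; split; [apply/in_asbool; left | move=> w /in_asbool [->| ->]].
  have Ey : y = z.
    by symmetry; apply: Hu; split; [apply/in_asbool; right | move=> w /in_asbool [->| ->]].
  by rewrite Ex Ey.
have Htrans : forall x y z, R x y -> R y z -> R x z.
  move=> x y z H1 H2.
  have [m [Hm Hmm]] := Hmin (fun w => w = x \/ w = y \/ w = z) (ex_intro _ x (or_introl Logic.eq_refl)).
  case: Hm => [Em|[Em|Em]]; subst m.
  - by apply: Hmm; right; right.
  - by rewrite (Hanti x y H1 (Hmm x (or_introl Logic.eq_refl))).
  - by rewrite -(Hanti y z H2 (Hmm y (or_intror (or_introl Logic.eq_refl)))).
exists (fun x y => R x y /\ x <> y); split; [|split].
- move=> a; apply: NNPP => Hna.
  have [m [Hm Hmm]] := Hmin (fun w => ~ Acc (fun x y => R x y /\ x <> y) w) (ex_intro _ a Hna).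
  apply: Hm; constructor=> y [Hy1 Hy2]; apply: NNPP => Hy.
  by apply: Hy2; apply: Hanti => //; apply: Hmm.
- move=> x y z [H1 H2] [H3 H4]; split; first exact: Htrans H1 H3.
  by move=> Exz; subst z; apply: H2; apply: Hanti.
- by move=> x y Hxy; case: (Htot x y) => H; [left|right]; split=> // E; apply: Hxy.
Qed.
End WellOrdering.

Module Enumeration.
Import ssreflect ssrfun ssrbool eqtype ssrnat seq choice.
Lemma code_lists_enumerable :
  exists g : nat -> list (bool * nat * nat * nat)%type, forall l, exists k, g k = l.
Proof. by exists (fun k => odflt [::] (unpickle k)) => l; exists (pickle l); rewrite pickleK. Qed.
End Enumeration.

Open Scope R_scope.

Definition rat_of_code (c : bool * nat * nat) : Q :=
  let '(s, a, b) := c in Qmake (if s then (- Z.of_nat a)%Z else Z.of_nat a) (Pos.of_succ_nat b).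

Lemma rat_of_code_surj : forall q : Q, exists c, rat_of_code c = q.
Proof.
intros [z p]. destruct (Z.neg_nonneg_cases z) as [Hz|Hz].
- exists (true, Z.to_nat (- z), pred (Pos.to_nat p)). simpl.
  f_equal. rewrite Z2Nat.id by lia. lia.
  apply Pos2Nat.inj. rewrite SuccNat2Pos.id_succ. pose proof (Pos2Nat.is_pos p). lia.
- exists (false, Z.to_nat z, pred (Pos.to_nat p)). simpl.
  f_equal. rewrite Z2Nat.id by lia. lia.
  apply Pos2Nat.inj. rewrite SuccNat2Pos.id_succ. pose proof (Pos2Nat.is_pos p). lia.
Qed.

Lemma Q_enumerable : exists g : nat -> Q, forall q, exists k, g k = q.
Proof.
destruct Enumeration.code_lists_enumerable as [g Hg].
exists (fun k => match g k with (s, a, b, _) :: _ => rat_of_code (s, a, b) | nil => 0%Q end).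
intros q. destruct (rat_of_code_surj q) as [[[s a] b] Hc].
destruct (Hg ((s, a, b, 0%nat) :: nil)) as [k Hk]. exists k. rewrite Hk. exact Hc.
Qed.

Lemma Q2R0 : Q2R 0 = 0.
Proof. unfold Q2R; simpl; field. Qed.
Lemma Q2R1 : Q2R 1 = 1.
Proof. unfold Q2R; simpl; field. Qed.
Lemma Q2R_nz : forall q, ~ (q == 0)%Q -> Q2R q <> 0.
Proof. intros q Hq H. apply Hq. apply eqR_Qeq. rewrite H, Q2R0. reflexivity. Qed.

(* Formal expressions over an alphabet X: finite lists of rational-weighted
   atoms, each atom a natural number or a letter of X.  They index the
   transfinite recursion; a set of expressions is as large as needed (it
   contains countably many letter-free expressions and all finite lists of
   lists) while staying small over a small alphabet. *)
Definition expr (X : Type) := list (Q * (nat + X)).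

Definition letters {X : Type} (l : expr X) : list X :=
  flat_map (fun p => match snd p with inl _ => nil | inr v => v :: nil end) l.

Definition over {X : Type} (P : X -> Prop) (l : expr X) := forall v, In v (letters l) -> P v.

Lemma over_cons {X} (P : X -> Prop) q a l : over P ((q, a) :: l) <->
  ((match a with inl _ => True | inr v => P v end) /\ over P l).
Proof.
unfold over; simpl. split.
- intros H. split. destruct a; auto. apply H; simpl; auto.
  intros v Hv. apply H. destruct a; simpl; auto.
- intros [H1 H2] v Hv. destruct a; simpl in Hv; auto. destruct Hv as [<-|Hv]; auto.
Qed.

Lemma over_app {X} (P : X -> Prop) l1 l2 : over P (l1 ++ l2) <-> over P l1 /\ over P l2.
Proof.
unfold over, letters. rewrite flat_map_app. split.
- intros H; split; intros v Hv; apply H; apply in_or_app; auto.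
- intros [H1 H2] v Hv. apply in_app_or in Hv. destruct Hv; auto.
Qed.

Lemma over_nil {X} (P : X -> Prop) : over P nil.
Proof. intros v []. Qed.

(* An injective coding of expressions over expressions into expressions:
   the numeric atoms 0 and 1 serve as separators and are shifted away from
   the data.  [decode] is a left inverse of [encode]. *)
Section Coding.
Variable X : Type.

Definition shift_atom (p : Q * (nat + X)) : Q * (nat + X) :=
  match p with (q, inl k) => (q, inl (S (S k))) | (q, inr x) => (q, inr x) end.
Definition unshift_atom (p : Q * (nat + X)) : Q * (nat + X) :=
  match p with (q, inl (S (S k))) => (q, inl k) | (q, inl _) => (q, inl 0%nat) | (q, inr x) => (q, inr x) end.
Definition unshift_outer (p : Q * (nat + X)) : Q * (nat + expr X) :=
  match p with (q, inl (S (S k))) => (q, inl k) | (q, inl _) => (q, inl 0%nat)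
             | (q, inr x) => (q, inr ((q, inr x) :: nil)) end.
Definition encode_atom (p : Q * (nat + expr X)) : expr X :=
  match p with
  | (q, inl k) => (0%Q, inl 1%nat) :: (q, inl (S (S k))) :: nil
  | (q, inr l) => (q, inl 0%nat) :: map shift_atom l
  end.
Definition encode (y : expr (expr X)) : expr X := flat_map encode_atom y.

(* Right-to-left decoding: a state is (decoded suffix, pending atoms). *)
Definition decode_step (it : Q * (nat + X)) (s : expr (expr X) * expr X) : expr (expr X) * expr X :=
  let (o, c) := s in
  match it with
  | (q, inl 0%nat) => ((q, inr (map unshift_atom c)) :: o, nil)
  | (q, inl 1%nat) => (map unshift_outer c ++ o, nil)
  | _ => (o, it :: c)
  end.
Definition decode (l : expr X) : expr (expr X) :=
  let (o, c) := fold_right decode_step (nil, nil) l in map unshift_outer c ++ o.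

Lemma decode_shifted : forall l o c,
  fold_right decode_step (o, c) (map shift_atom l) = (o, map shift_atom l ++ c).
Proof.
induction l as [|[q [k|x]] l IH]; intros o c; simpl; auto; rewrite IH; reflexivity.
Qed.

Lemma unshift_shift : forall l, map unshift_atom (map shift_atom l) = l.
Proof. induction l as [|[q [k|x]] l IH]; simpl; auto; rewrite IH; auto. Qed.

Lemma decode_encode_acc : forall y o, fold_right decode_step (o, nil) (encode y) = (y ++ o, nil).
Proof.
induction y as [|[q [k|l]] y IH]; intros o; simpl; auto.
- unfold encode in IH. rewrite IH. reflexivity.
- unfold encode in IH. rewrite fold_right_app, IH. simpl. rewrite decode_shifted.
  simpl. rewrite app_nil_r, unshift_shift. reflexivity.
Qed.

Lemma decode_encode : forall y, decode (encode y) = y.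
Proof. intros y. unfold decode. rewrite decode_encode_acc. simpl. apply app_nil_r. Qed.

Lemma over_encode (P : X -> Prop) : forall y, over (over P) y -> over P (encode y).
Proof.
induction y as [|[q [k|l]] y IH]; intros H; unfold encode; simpl.
- apply over_nil.
- apply over_cons in H. destruct H as [_ H].
  apply over_cons. split; [exact Logic.I|]. apply over_cons. split; [exact Logic.I|].
  change (over P (encode y)). apply IH, H.
- apply over_cons in H. destruct H as [H1 H]. apply over_cons. split; [exact Logic.I|].
  apply over_app. split; [|change (over P (encode y)); apply IH, H].
  clear -H1. induction l as [|[q' [k|x]] l IH]; simpl.
  + apply over_nil.
  + apply over_cons in H1. apply over_cons. split; auto. apply IH. apply H1.
  + apply over_cons in H1. destruct H1 as [H1a H1b]. apply over_cons. split; [exact H1a|]. apply IH. exact H1b.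
Qed.
End Coding.

Definition expr_of_codes {X : Type} (cl : list (bool * nat * nat * nat)) : expr X :=
  map (fun c : bool * nat * nat * nat => let '(s, a, b, j) := c in (rat_of_code (s, a, b), @inl nat X j)) cl.

Lemma expr_of_codes_onto {X : Type} (y : expr X) :
  over (fun _ => False) y -> exists cl, expr_of_codes cl = y.
Proof.
induction y as [|[q [k|v]] y IH]; intros Hy.
- exists nil; reflexivity.
- apply over_cons in Hy. destruct IH as [cl Hcl]. apply Hy.
  destruct (rat_of_code_surj q) as [[[s a] b] Hq].
  exists ((s, a, b, k) :: cl). subst q y. reflexivity.
- apply over_cons in Hy. destruct Hy as [[] _].
Qed.

Section SmallSets.
Variable n : nat.
Variable I : set_ n -> Prop.
Hypothesis I_sub : forall A B : set_ n, subset_ A B -> I B -> I A.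
Hypothesis I_cunion : forall A : nat -> set_ n, (forall k, I (A k)) -> I (fun x => exists k, A k x).
Hypothesis I_full : ~ I (fun _ => True).
Hypothesis I_single : forall p, I (fun x => x = p).

Lemma I_empty : I (fun _ => False).
Proof. apply (I_sub _ (fun x => x = (fun _ => 0))); [intros x []|apply I_single]. Qed.

(* A set is small when it has fewer than cof(I) elements, i.e. it cannot index
   a cofinal family of I-sets. *)
Definition small {U : Type} (A : U -> Prop) := ~ cof_le_card I {x | A x}.

Lemma small_image {U W : Type} (A : U -> Prop) (B : W -> Prop) (f : U -> W) :
  (forall w, B w -> exists u, A u /\ f u = w) -> small A -> small B.
Proof.
intros Hs HA [g [Hg1 Hg2]]. apply HA.
exists (fun u => fun x => exists h : B (f (proj1_sig u)), g (exist _ (f (proj1_sig u)) h) x).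
split.
- intros [u Au]. simpl. destruct (classic (B (f u))) as [Hb|Hb].
  + apply (I_sub _ (g (exist _ (f u) Hb))); [|apply Hg1].
    intros x [h Hx]. rewrite (proof_irrelevance _ h Hb) in Hx. exact Hx.
  + apply (I_sub _ (fun _ => False)); [intros x [h _]; contradiction|apply I_empty].
- intros C HC. destruct (Hg2 C HC) as [[w Bw] Hw].
  destruct (Hs w Bw) as [u [Au Hu]]. exists (exist _ u Au). simpl.
  intros x Cx. subst w. exists Bw. apply Hw. exact Cx.
Qed.

(* cof(I) is uncountable: a countable family of I-sets has an I-set union,
   which misses some point p, and then {p} is covered by no member. *)
Lemma small_nat : small (fun _ : nat => True).
Proof.
intros [g [Hg1 Hg2]].
set (U := fun x => exists k, g (exist _ k Logic.I) x).
assert (IU : I U) by (apply I_cunion; intros k; apply Hg1).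
assert (Hp : exists p, ~ U p).
{ apply NNPP. intros Hn. apply I_full. apply (I_sub _ U); [|exact IU].
  intros x _. apply NNPP. intros Hx. apply Hn. exists x. exact Hx. }
destruct Hp as [p Hp].
destruct (Hg2 _ (I_single p)) as [[k t] Hk].
apply Hp. exists k. destruct t. apply Hk. reflexivity.
Qed.

Lemma small_no_letters {X : Type} : small (over (fun _ : X => False)).
Proof.
destruct Enumeration.code_lists_enumerable as [g Hg].
apply small_image with (A := fun _ : nat => True) (f := fun k => expr_of_codes (g k)).
2: apply small_nat.
intros y Hy. destruct (expr_of_codes_onto y Hy) as [cl Hcl].
destruct (Hg cl) as [k Hk]. exists k. split; auto. rewrite Hk. exact Hcl.
Qed.

Lemma small_nested {X : Type} (P : X -> Prop) : small (over P) -> small (over (over P)).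
Proof.
apply small_image with (f := decode X). intros y Hy. exists (encode X y). split.
apply over_encode, Hy. apply decode_encode.
Qed.

(* Adding one letter to a small alphabet keeps it small: the new letter is
   represented by the numeric atom 0 and the other numeric atoms are shifted. *)
Lemma small_add_letter {X : Type} (P : X -> Prop) (b : X) :
  small (over P) -> small (over (fun v => P v \/ v = b)).
Proof.
set (pad := fun p : Q * (nat + X) => match p with
  | (q, inl 0%nat) => (q, inr b) | (q, inl (S k)) => (q, inl k) | (q, inr v) => (q, inr v) end).
set (unpad := fun p : Q * (nat + X) => match p with
  | (q, inl k) => (q, inl (S k))
  | (q, inr v) => if excluded_middle_informative (v = b) then (q, inl 0%nat) else (q, inr v) end).
apply small_image with (f := map pad). intros y Hy. exists (map unpad y). split.
- induction y as [|[q [k|v]] y IH]; simpl.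
  + apply over_nil.
  + apply over_cons in Hy. apply over_cons. split; auto. apply IH, Hy.
  + apply over_cons in Hy. destruct Hy as [Hv Hy].
    destruct (excluded_middle_informative (v = b)); apply over_cons; split; auto.
    destruct Hv; [auto|contradiction].
- induction y as [|[q [k|v]] y IH]; simpl; auto.
  + apply over_cons in Hy. rewrite IH by apply Hy. reflexivity.
  + apply over_cons in Hy.
    destruct (excluded_middle_informative (v = b)); simpl; rewrite IH by apply Hy;
    [subst; reflexivity | reflexivity].
Qed.

Section Construction.
Hypothesis I_scale : forall (r : R) (A : set_ n), r <> 0 -> I A -> I (fun y => A (fun i => r * y i)).
Variable J : set_ n -> Prop.
Hypothesis J_sub : forall A B : set_ n, subset_ A B -> J B -> J A.
Hypothesis J_union2 : forall A B : set_ n, J A -> J B -> J (fun x => A x \/ B x).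
Hypothesis J_single : forall p, J (fun x => x = p).
Variable Z : set_ n.
Hypothesis JZ : J Z.
Hypothesis IZc : I (fun x => ~ Z x).
Hypothesis Hcov : covt_ge_cof I.

Variable V : Type.
Variable lt : V -> V -> Prop.
Hypothesis lt_wf : well_founded lt.
Hypothesis lt_trans : forall x y z, lt x y -> lt y z -> lt x z.
Hypothesis lt_total : forall x y, x <> y -> lt x y \/ lt y x.
Variable lt2 : expr V -> expr V -> Prop.
Hypothesis lt2_wf : well_founded lt2.
Hypothesis lt2_trans : forall x y z, lt2 x y -> lt2 y z -> lt2 x z.
Hypothesis lt2_total : forall x y, x <> y -> lt2 x y \/ lt2 y x.
Variable P : V -> Prop.
Hypothesis P_big : ~ small (over P).
Hypothesis P_seg : forall b, P b -> small (over (fun v => lt v b)).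
Variable fam : expr V -> set_ n.
Hypothesis fam_I : forall t, over P t -> I (fam t).
Hypothesis fam_cof : forall C, I C -> exists t, over P t /\ subset_ C (fam t).

(* P has no largest element, since adding one letter keeps a set small. *)
Lemma segment_no_max : forall m, P m -> exists g, P g /\ lt m g.
Proof.
intros m Pm. apply NNPP. intros H. apply P_big.
apply small_image with (A := over (fun v => lt v m \/ v = m)) (f := fun w => w).
- intros w Hw. exists w. split; auto. intros v Hv. specialize (Hw v Hv).
  destruct (classic (v = m)) as [E|E]; auto.
  destruct (lt_total v m E) as [L|L]; auto. exfalso. apply H. exists v. auto.
- apply small_add_letter. apply P_seg, Pm.
Qed.

(* P is nonempty, since expressions over the empty alphabet are small. *)
Lemma segment_nonempty : exists b, P b.
Proof.
apply NNPP. intros H. apply P_big.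
apply small_image with (A := over (fun _ : V => False)) (f := fun w => w).
- intros w Hw. exists w. split; auto. intros v Hv. apply H. exists v. apply Hw, Hv.
- apply small_no_letters.
Qed.

Definition max_opt (a : option V) (v : V) : option V :=
  match a with None => Some v
  | Some w => if excluded_middle_informative (lt w v) then Some v else Some w end.
Definition max_letter (l : list V) : option V := fold_right (fun v a => max_opt a v) None l.
Definition rank (t : expr V) := max_letter (letters t).

Lemma max_letter_spec : forall l, (max_letter l = None /\ l = nil) \/
  (exists m, max_letter l = Some m /\ In m l /\ forall v, In v l -> v = m \/ lt v m).
Proof.
induction l as [|a l IH]; simpl; auto.
right. destruct IH as [[E ->]|[m [E [Hm Hall]]]]; rewrite E; simpl.
- exists a. split; auto. split; auto. intros v [<-|[]]; auto.
- destruct (excluded_middle_informative (lt m a)) as [L|L].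
  + exists a. split; auto. split; auto. intros v [<-|Hv]; auto.
    destruct (Hall v Hv) as [->|Hv']; eauto.
  + exists m. split; auto. split; auto. intros v [E0|Hv]; [subst a|auto].
    destruct (classic (v = m)) as [E'|E']; auto.
    destruct (lt_total _ _ E'); auto. contradiction.
Qed.

Definition rank_le (a b : option V) := match a, b with None, _ => True | Some _, None => False
  | Some x, Some y => x = y \/ lt x y end.
Definition rank_lt (a b : option V) := match a, b with None, Some _ => True
  | Some x, Some y => lt x y | _, _ => False end.

Lemma rank_lt_wf : well_founded rank_lt.
Proof.
assert (H0 : Acc rank_lt None) by (constructor; intros [y|] H; destruct H).
intros [v|]; auto. induction v as [v IH] using (well_founded_induction lt_wf).
constructor. intros [w|] H; [apply IH; exact H|exact H0].
Qed.

Lemma rank_lt_trans : forall a b c, rank_lt a b -> rank_lt b c -> rank_lt a c.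
Proof. intros [a|] [b|] [c|]; simpl; eauto; tauto. Qed.

(* The recursion order on expressions: by rank, then by lt2.  Every
   expression has fewer than cof(I) predecessors, because they all have rank
   at most the rank of t. *)
Definition before (u t : expr V) := rank_lt (rank u) (rank t) \/ (rank u = rank t /\ lt2 u t).

Lemma before_wf : well_founded before.
Proof.
intros t. remember (rank t) as r eqn:Er. revert t Er.
induction r as [r IHr] using (well_founded_induction rank_lt_wf).
intros t Er. induction t as [t IHt] using (well_founded_induction lt2_wf).
constructor. intros u [Hu|[Hu1 Hu2]].
- apply (IHr (rank u)); auto. rewrite Er; exact Hu.
- apply IHt; auto. rewrite Hu1; auto.
Qed.

Lemma before_trans : forall x y z, before x y -> before y z -> before x z.
Proof.
intros x y z [H1|[H1 H1']] [H2|[H2 H2']].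
- left; eapply rank_lt_trans; eauto.
- left; rewrite <- H2; auto.
- left; rewrite H1; auto.
- right; split; [congruence|eauto].
Qed.

Lemma before_total : forall x y, x <> y -> before x y \/ before y x.
Proof.
intros x y Hxy. unfold before.
destruct (rank x) as [a|] eqn:Ea; destruct (rank y) as [b|] eqn:Eb; simpl.
- destruct (classic (a = b)) as [->|E].
  + destruct (lt2_total x y Hxy); auto.
  + destruct (lt_total a b E); auto.
- auto.
- auto.
- destruct (lt2_total x y Hxy); auto.
Qed.

Lemma before_rank_le : forall u t, before u t -> rank_le (rank u) (rank t).
Proof.
intros u t [H|[H _]].
- destruct (rank u), (rank t); simpl in *; auto.
- rewrite H. destruct (rank t); simpl; auto.
Qed.

Lemma latest_exists : forall l : list (expr V), l <> nil ->
  exists m, In m l /\ forall y, In y l -> y = m \/ before y m.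
Proof.
induction l as [|a l IH]; intros Hl; [congruence|].
destruct l as [|b l'].
- exists a. split; simpl; auto. intros y [<-|[]]; auto.
- destruct IH as [m [Hm Hall]]; [congruence|].
  destruct (classic (a = m)) as [E|E].
  + exists m. split; [simpl; auto|]. intros y [<-|Hy]; auto.
  + destruct (before_total a m E) as [L|L].
    * exists m. split; [simpl; auto|]. intros y [<-|Hy]; auto.
    * exists a. split; [simpl; auto|]. intros y [<-|Hy]; auto.
      destruct (Hall y Hy) as [->|L']; auto. right; eapply before_trans; eauto.
Qed.

Lemma predecessors_bounded : forall t, over P t ->
  exists g, P g /\ forall u, before u t -> over (fun v => lt v g) u.
Proof.
intros t Ht. destruct (max_letter_spec (letters t)) as [[E Hn]|[m [E [Hm _]]]].
- destruct segment_nonempty as [b Pb]. exists b. split; auto. intros u Hu.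
  apply before_rank_le in Hu. unfold rank at 2 in Hu. rewrite E in Hu.
  unfold rank in Hu. destruct (max_letter_spec (letters u)) as [[E' Hn']|[m' [E' _]]].
  + intros v Hv. rewrite Hn' in Hv. destruct Hv.
  + rewrite E' in Hu. destruct Hu.
- destruct (segment_no_max m (Ht m Hm)) as [g [Pg Lg]]. exists g. split; auto.
  intros u Hu. apply before_rank_le in Hu. unfold rank at 2 in Hu. rewrite E in Hu.
  unfold rank in Hu. intros v Hv.
  destruct (max_letter_spec (letters u)) as [[E' Hn']|[m' [E' [_ Hall]]]].
  + rewrite Hn' in Hv. destruct Hv.
  + rewrite E' in Hu. simpl in Hu.
    destruct (Hall v Hv) as [->|L]; destruct Hu as [->|L']; eauto.
Qed.

Definition comb (x : expr V -> pt n) (l : list (Q * expr V)) : pt n :=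
  fun i => fold_right (fun p acc => Q2R (fst p) * x (snd p) i + acc) 0 l.

Lemma comb_app : forall x l1 l2 i, comb x (l1 ++ l2) i = comb x l1 i + comb x l2 i.
Proof.
intros x l1 l2 i. induction l1 as [|p l1 IH]; unfold comb in *; simpl. ring.
rewrite IH. ring.
Qed.

Lemma comb_scale : forall x c l i,
  comb x (map (fun p => (c * fst p, snd p)%Q) l) i = Q2R c * comb x l i.
Proof.
intros x c l i. induction l as [|p l IH]; unfold comb in *; simpl. ring.
rewrite IH, Q2R_mult. ring.
Qed.

Lemma comb_ext : forall x1 x2 l, (forall p, In p l -> x1 (snd p) = x2 (snd p)) ->
  comb x1 l = comb x2 l.
Proof.
intros x1 x2 l H. extensionality i. induction l as [|p l IH]; unfold comb in *; simpl; auto.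
rewrite IH by (intros; apply H; simpl; auto). rewrite H by (simpl; auto). reflexivity.
Qed.

Definition earlier (t : expr V) (l : list (Q * expr V)) :=
  forall p, In p l -> before (snd p) t /\ over P (snd p).

Definition earlier_span (x : expr V -> pt n) (t : expr V) : set_ n :=
  fun v => exists l, earlier t l /\ v = comb x l.

(* The requirement on the point chosen at stage t (properties (a) and (b)). *)
Definition generic (x : expr V -> pt n) (t : expr V) (y : pt n) :=
  ~ fam t y /\ forall l q, earlier t l -> ~ (q == 0)%Q ->
     Z (fun i => comb x l i + Q2R q * y i).

Definition select (t : expr V) (e : expr (expr V)) : list (Q * expr V) :=
  flat_map (fun p => match snd p with inl _ => nil
    | inr u => if excluded_middle_informative (before u t /\ over P u) then (fst p, u) :: nil else nil end) e.

(* The span of earlier points is small: it is an image of the expressions over expressions over {v | lt v g}. *)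
Lemma earlier_span_small : forall x t, over P t -> small (earlier_span x t).
Proof.
intros x t Ht. destruct (predecessors_bounded t Ht) as [g [Pg Hg]].
apply small_image with (A := over (over (fun v => lt v g))) (f := fun e => comb x (select t e)).
2: apply small_nested, P_seg, Pg.
intros w [l [Hl ->]]. exists (map (fun p => (fst p, inr (snd p))) l). split.
- induction l as [|[q u] l IH]; simpl. apply over_nil.
  apply over_cons. split.
  + apply Hg. apply (Hl (q, u)). simpl; auto.
  + apply IH. intros p Hp. apply Hl. simpl; auto.
- f_equal. induction l as [|[q u] l IH]; simpl; auto.
  destruct (excluded_middle_informative (before u t /\ over P u)) as [_|C].
  + simpl. rewrite IH; auto. intros p Hp. apply Hl. simpl; auto.
  + exfalso. apply C. apply (Hl (q, u)). simpl; auto.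
Qed.

(* The points that are bad at stage t form an I-set (a countable union of
   dilates of the complement of Z, together with fam t). *)
Lemma bad_points_in_I : forall t, over P t ->
  I (fun y => (exists q, ~ (q == 0)%Q /\ ~ Z (fun i => Q2R q * y i)) \/ fam t y).
Proof.
intros t Ht. destruct Q_enumerable as [gq Hgq].
apply (I_sub _ (fun y => exists k, match k with O => fam t y
     | S k' => ~ (gq k' == 0)%Q /\ ~ Z (fun i => Q2R (gq k') * y i) end)).
- intros y [[q [Hq HZ]]|Hf].
  + destruct (Hgq q) as [k Hk]. exists (S k). rewrite Hk. auto.
  + exists O. exact Hf.
- apply I_cunion. intros [|k].
  + apply fam_I, Ht.
  + destruct (classic (gq k == 0)%Q) as [E|E].
    * apply (I_sub _ (fun _ => False)); [intros y [C _]; contradiction|apply I_empty].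
    * apply (I_sub _ (fun y => (fun z => ~ Z z) (fun i => Q2R (gq k) * y i))).
      intros y [_ H]. exact H.
      apply (I_scale (Q2R (gq k)) (fun z => ~ Z z)). apply Q2R_nz, E. exact IZc.
Qed.

(* A generic point exists: by cov_t(I) >= cof(I), the small set of earlier
   combinations plus the I-set of bad points does not cover R^n. *)
Lemma generic_exists : forall x t, over P t -> exists y, generic x t y.
Proof.
intros x t Ht.
set (M := fun y : pt n => (exists q, ~ (q == 0)%Q /\ ~ Z (fun i => Q2R q * y i)) \/ fam t y).
destruct (classic (sum_is_full (earlier_span x t) M)) as [Hf|Hf].
{ exfalso. apply (earlier_span_small x t Ht). apply Hcov. exists M.
  split; [apply bad_points_in_I, Ht|exact Hf]. }
apply not_all_ex_not in Hf. destruct Hf as [y Hy]. exists y. split.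
- intros Hfy. apply Hy. exists (fun _ => 0), y. split; [|split].
  + exists nil. split. intros p []. reflexivity.
  + right; exact Hfy.
  + intros i. ring.
- intros l q Hl Hq. apply NNPP. intros HZ. apply Hy.
  pose proof (Q2R_nz q Hq) as Hq'.
  exists (comb x (map (fun p => ((- / q) * fst p, snd p)%Q) l)),
         (fun i => / Q2R q * (comb x l i + Q2R q * y i)).
  split; [|split].
  + exists (map (fun p => ((- / q) * fst p, snd p)%Q) l). split; auto.
    intros p Hp. apply in_map_iff in Hp. destruct Hp as [p0 [<- Hp0]]. exact (Hl p0 Hp0).
  + left. exists q. split; auto. intros HZ'. apply HZ.
    replace (fun i => comb x l i + Q2R q * y i) with
      (fun i => Q2R q * (/ Q2R q * (comb x l i + Q2R q * y i))); auto.
    extensionality i. field. exact Hq'.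
  + intros i. rewrite comb_scale, Q2R_opp, Q2R_inv by exact Hq. field. exact Hq'.
Qed.

Definition choose_point (t : expr V) (rec : forall u, before u t -> pt n) : pt n :=
  epsilon (inhabits (fun _ : Fin.t n => 0))
    (generic (fun u => match excluded_middle_informative (before u t) with
                    | left h => rec u h | right _ => fun _ => 0 end) t).

Definition pts : expr V -> pt n := Fix before_wf (fun _ => pt n) choose_point.

Lemma pts_eq : forall t, pts t = choose_point t (fun u _ => pts u).
Proof.
intros t. unfold pts. apply (Fix_eq before_wf (fun _ => pt n) choose_point).
intros t0 f g H. unfold choose_point. f_equal. f_equal.
extensionality u. destruct (excluded_middle_informative (before u t0)); auto.
Qed.

Lemma pts_generic : forall t, over P t -> generic pts t (pts t).
Proof.
intros t Ht. rewrite pts_eq. unfold choose_point.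
set (x' := fun u => match excluded_middle_informative (before u t) with
                    | left _ => pts u | right _ => fun _ : Fin.t n => 0 end).
assert (G : generic x' t (epsilon (inhabits (fun _ : Fin.t n => 0)) (generic x' t))).
{ apply epsilon_spec. apply generic_exists, Ht. }
destruct G as [G1 G2]. split; auto.
intros l q Hl Hq. specialize (G2 l q Hl Hq).
rewrite (comb_ext pts x' l); auto.
intros p Hp. unfold x'. destruct (excluded_middle_informative (before (snd p) t)) as [_|C]; auto.
exfalso. apply C. apply Hl, Hp.
Qed.

Definition coef_of (m : expr V) (l : list (Q * expr V)) : Q :=
  fold_right (fun p acc => if excluded_middle_informative (snd p = m) then (fst p + acc)%Q else acc) 0%Q l.
Definition drop_index (m : expr V) (l : list (Q * expr V)) : list (Q * expr V) :=
  fold_right (fun p acc => if excluded_middle_informative (snd p = m) then acc else p :: acc) nil l.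

Lemma comb_split : forall m l i,
  comb pts l i = Q2R (coef_of m l) * pts m i + comb pts (drop_index m l) i.
Proof.
intros m l i. induction l as [|p l IH]; unfold comb in *; simpl.
- rewrite Q2R0. ring.
- destruct (excluded_middle_informative (snd p = m)) as [E|E]; simpl.
  + rewrite IH, Q2R_plus, E. ring.
  + rewrite IH. ring.
Qed.

Lemma drop_index_shorter : forall m l, In m (map snd l) -> (length (drop_index m l) < length l)%nat.
Proof.
intros m l. induction l as [|p l IH]; simpl; [intros []|].
intros H. destruct (excluded_middle_informative (snd p = m)) as [E|E]; simpl.
- assert (length (drop_index m l) <= length l)%nat; [|lia].
  clear. induction l as [|q l IH]; simpl; auto.
  destruct (excluded_middle_informative (snd q = m)); simpl; lia.
- destruct H as [H|H]; [contradiction|]. specialize (IH H). lia.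
Qed.

Lemma in_drop_index : forall m l p, In p (drop_index m l) -> In p l /\ snd p <> m.
Proof.
intros m l p. induction l as [|q l IH]; simpl; [intros []|].
destruct (excluded_middle_informative (snd q = m)) as [E|E]; simpl.
- intros H; destruct (IH H); auto.
- intros [<-|H]; auto. destruct (IH H); auto.
Qed.

(* Every combination of the chosen points is 0 or lies in Z: induct on the
   length, and apply property (b) at the latest index with nonzero coefficient. *)
Lemma comb_zero_or_Z : forall k l, (length l <= k)%nat -> (forall p, In p l -> over P (snd p)) ->
  (forall i, comb pts l i = 0) \/ Z (comb pts l).
Proof.
induction k as [|k IH]; intros l Hlen Hl.
{ destruct l; simpl in Hlen; [|lia]. left. intros i. reflexivity. }
destruct l as [|p0 l0] eqn:El.
{ left. intros i. reflexivity. }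
rewrite <- El in *.
destruct (latest_exists (map snd l)) as [m [Hm Hmax]].
{ rewrite El. simpl. congruence. }
assert (Pm : over P m).
{ apply in_map_iff in Hm. destruct Hm as [p [<- Hp]]. apply Hl, Hp. }
assert (Hf : earlier m (drop_index m l)).
{ intros p Hp. apply in_drop_index in Hp. destruct Hp as [Hp Hne]. split.
  - destruct (Hmax (snd p)) as [E|E]; auto. apply in_map, Hp. contradiction.
  - apply Hl, Hp. }
destruct (classic (coef_of m l == 0)%Q) as [E|E].
- assert (Hc : forall i, comb pts l i = comb pts (drop_index m l) i).
  { intros i. rewrite (comb_split m). rewrite (Qeq_eqR _ _ E), Q2R0. ring. }
  destruct (IH (drop_index m l)) as [H|H].
  + pose proof (drop_index_shorter m l Hm). lia.
  + intros p Hp. apply Hf, Hp.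
  + left. intros i. rewrite Hc. apply H.
  + right. replace (comb pts l) with (comb pts (drop_index m l)); auto.
    extensionality i. rewrite Hc. reflexivity.
- right. destruct (pts_generic m Pm) as [_ G]. specialize (G (drop_index m l) (coef_of m l) Hf E).
  replace (comb pts l) with (fun i => comb pts (drop_index m l) i + Q2R (coef_of m l) * pts m i); auto.
  extensionality i. rewrite (comb_split m l i). ring.
Qed.

Theorem construction : exists H : set_ n, Q_subspace H /\ J H /\ ~ I H.
Proof.
exists (fun v => exists l, (forall p, In p l -> over P (snd p)) /\ v = comb pts l).
split; [|split].
- split; [|split].
  + exists nil. split. intros p []. reflexivity.
  + intros x y [l1 [H1 ->]] [l2 [H2 ->]]. exists (l1 ++ l2). split.
    * intros p Hp. apply in_app_or in Hp. destruct Hp; auto.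
    * extensionality i. rewrite comb_app. reflexivity.
  + intros q x [l [H1 ->]]. exists (map (fun p => (q * fst p, snd p)%Q) l). split.
    * intros p Hp. apply in_map_iff in Hp. destruct Hp as [p0 [<- Hp0]]. exact (H1 p0 Hp0).
    * extensionality i. rewrite comb_scale. reflexivity.
- apply (J_sub _ (fun x => Z x \/ x = (fun _ => 0))).
  + intros v [l [Hl ->]]. destruct (comb_zero_or_Z (length l) l (le_n _) Hl) as [H|H]; auto.
    right. extensionality i. apply H.
  + apply J_union2; auto.
- intros IH. destruct (fam_cof _ IH) as [t [Ht Hsub]].
  destruct (pts_generic t Ht) as [G _]. apply G. apply Hsub.
  exists ((1%Q, t) :: nil). split.
  + intros p [<-|[]]. exact Ht.
  + extensionality i. unfold comb. simpl. rewrite Q2R1. ring.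
Qed.

End Construction.
End SmallSets.

Lemma wf_min {T : Type} (lt : T -> T -> Prop) (Hwf : well_founded lt) (A : T -> Prop) :
  (exists b, A b) -> exists b, A b /\ forall c, lt c b -> ~ A c.
Proof.
intros [b Ab]. apply NNPP. intros H.
assert (Hno : forall x, ~ A x).
{ intros x. induction x as [x IH] using (well_founded_induction Hwf).
  intros Ax. apply H. exists x. split; auto. }
exact (Hno b Ab).
Qed.

(* In a well-ordered alphabet there is an initial segment P (the least one
   whose expressions are not small, or the whole alphabet) such that
   expressions over P are not small but expressions over any proper initial
   segment of P are.  Expressions over the whole alphabet are not small: the
   first letter of an expression yields the trivially cofinal family C |-> C. *)
Lemma critical_segment_exists (n : nat) (I : set_ n -> Prop)
  (I_sub : forall A B : set_ n, subset_ A B -> I B -> I A)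
  (I_single : forall p, I (fun x => x = p))
  (lt : set_ n -> set_ n -> Prop) (lt_wf : well_founded lt) :
  exists P : set_ n -> Prop, ~ small n I (over P) /\
    forall b, P b -> small n I (over (fun v => lt v b)).
Proof.
destruct (classic (exists b, ~ small n I (over (fun v => lt v b)))) as [Hb|Hb].
- destruct (wf_min lt lt_wf _ Hb) as [b [Hb1 Hb2]].
  exists (fun v => lt v b). split; auto.
  intros c Hc. apply NNPP. apply Hb2, Hc.
- exists (fun _ => True). split.
  + intros Hs. apply Hs.
    exists (fun s => fun x => match letters (proj1_sig s) with v :: _ => I v /\ v x | nil => False end).
    split.
    * intros [t Ht]. simpl. destruct (letters t) as [|v l].
      -- apply I_empty; auto.
      -- destruct (classic (I v)) as [Iv|Iv].
         ++ apply (I_sub _ v); auto. intros x [_ H]; exact H.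
         ++ apply (I_sub _ (fun _ => False)); [intros x [H _]; contradiction|apply I_empty; auto].
    * intros C HC. exists (exist _ ((1%Q, inr C) :: nil) (fun _ _ => Logic.I)). simpl.
      intros x Cx. split; auto.
  + intros b _. apply NNPP. intros Hn. apply Hb. exists b. exact Hn.
Qed.

Theorem subspace_in_J_not_in_I (n : nat) (I : set_ n -> Prop)
  (I_sub : forall A B : set_ n, subset_ A B -> I B -> I A)
  (I_cunion : forall A : nat -> set_ n, (forall k, I (A k)) -> I (fun x => exists k, A k x))
  (I_full : ~ I (fun _ => True))
  (I_single : forall p, I (fun x => x = p))
  (I_scale : forall (r : R) (A : set_ n), r <> 0 -> I A -> I (fun y => A (fun i => r * y i)))
  (J : set_ n -> Prop)
  (J_sub : forall A B : set_ n, subset_ A B -> J B -> J A)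
  (J_union2 : forall A B : set_ n, J A -> J B -> J (fun x => A x \/ B x))
  (J_single : forall p, J (fun x => x = p))
  (Z : set_ n) (JZ : J Z) (IZc : I (fun x => ~ Z x)) (Hcov : covt_ge_cof I) :
  exists H : set_ n, Q_subspace H /\ J H /\ ~ I H.
Proof.
destruct (WellOrdering.strict_well_order_exists (set_ n)) as [lt [lt_wf [lt_trans lt_total]]].
destruct (WellOrdering.strict_well_order_exists (expr (set_ n))) as [lt2 [lt2_wf [lt2_trans lt2_total]]].
destruct (critical_segment_exists n I I_sub I_single lt lt_wf) as [P [P_big P_seg]].
destruct (NNPP _ P_big) as [g [Hg1 Hg2]].
apply (construction n I I_sub I_cunion I_full I_single I_scale J J_sub J_union2 J_single
  Z JZ IZc Hcov (set_ n) lt lt_wf lt_trans lt_total lt2 lt2_wf lt2_trans lt2_total P P_big P_seg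
  (fun t => fun x => exists h : over P t, g (exist _ t h) x)).
- intros t Ht. apply (I_sub _ (g (exist _ t Ht))); [|apply Hg1].
  intros x [h Hx]. rewrite (proof_irrelevance _ h Ht) in Hx. exact Hx.
- intros C HC. destruct (Hg2 C HC) as [[t Ht] Hs]. exists t. split; auto.
  intros x Cx. exists Ht. apply Hs, Cx.
Qed.

Lemma le_eps : forall a b : R, (forall e, 0 < e -> a < b + e) -> a <= b.
Proof. intros a b H. destruct (Rle_dec a b) as [|C]; auto. specialize (H ((a - b)/2)). lra. Qed.

Lemma half_pow_pos : forall k, 0 < (1/2)^k.
Proof. intros k. apply pow_lt. lra. Qed.

Lemma half_pow_le : forall N M, (N <= M)%nat -> (1/2)^M <= (1/2)^N.
Proof.
intros N M H. induction H. lra. simpl. pose proof (half_pow_pos m). lra.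
Qed.

Lemma half_pow_small : forall eps, 0 < eps -> exists N, (1/2)^N < eps.
Proof.
intros eps He. destruct (pow_lt_1_zero (1/2)) with (y := eps) as [N HN].
rewrite Rabs_right; lra. auto.
exists N. specialize (HN N (le_n _)). rewrite Rabs_right in HN; auto.
apply Rle_ge, Rlt_le, half_pow_pos.
Qed.

Lemma geom_half : forall M, sum_f_R0 (fun k => (1/2)^(S k)) M = 1 - (1/2)^(S M).
Proof. induction M as [|M IH]. simpl. field. rewrite tech5, IH. simpl. field. Qed.

Lemma geom_half2 : forall M, sum_f_R0 (fun k => (1/2)^k) M <= 2.
Proof.
intros M. rewrite (sum_eq _ (fun k => (1/2)^(S k) * 2)) by (intros; simpl; field).
rewrite <- scal_sum, geom_half. pose proof (half_pow_pos (S M)). lra.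
Qed.

Lemma pow_le_self : forall x k, 0 <= x <= 1 -> (1 <= k)%nat -> x ^ k <= x.
Proof.
intros x k Hx Hk. destruct k as [|k]; [lia|]. simpl.
assert (x ^ k <= 1). { clear Hk. induction k; simpl. lra. nra. }
assert (0 <= x ^ k) by (apply pow_le; lra). nra.
Qed.

Lemma max_pow : forall a b k, 0 <= a -> 0 <= b -> Rmax a b ^ k <= a ^ k + b ^ k.
Proof.
intros a b k Ha Hb. pose proof (pow_le a k Ha). pose proof (pow_le b k Hb).
unfold Rmax. destruct (Rle_dec a b); lra.
Qed.

Lemma Rabs_mul_sub : forall r a b, r <> 0 -> Rabs (r * a - b) = Rabs r * Rabs (a - b / r).
Proof. intros r a b Hr. rewrite <- Rabs_mult. f_equal. field. auto. Qed.

Lemma cauchy_lim : forall (u r : nat -> R), (forall k, r k <= (1/2)^k) ->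
  (forall k m, (k <= m)%nat -> Rabs (u m - u k) <= r k) ->
  exists l, forall k, Rabs (l - u k) <= r k.
Proof.
intros u r Hr H.
assert (C : Cauchy_crit u).
{ intros eps He. destruct (half_pow_small (eps/2)) as [N HN]. lra.
  exists N. intros a b Ha Hb. unfold R_dist.
  pose proof (H N a Ha). pose proof (H N b Hb). pose proof (Hr N).
  replace (u a - u b) with ((u a - u N) - (u b - u N)) by ring.
  eapply Rle_lt_trans. apply Rabs_triang. rewrite Rabs_Ropp. lra. }
destruct (R_complete u C) as [l Hl]. exists l. intros k.
apply le_eps. intros e He. destruct (Hl e He) as [N HN].
specialize (HN (max N k) (Nat.le_max_l _ _)). unfold R_dist in HN.
pose proof (H k (max N k) (Nat.le_max_r _ _)).
replace (l - u k) with ((u (max N k) - u k) - (u (max N k) - l)) by ring.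
eapply Rle_lt_trans. apply Rabs_triang. rewrite Rabs_Ropp. lra.
Qed.

Lemma nested_limit {n : nat} (u : nat -> pt n) (r : nat -> R) :
  (forall k, r k <= (1/2)^k) ->
  (forall k m i, (k <= m)%nat -> Rabs (u m i - u k i) <= r k) ->
  exists p : pt n, forall k i, Rabs (p i - u k i) <= r k.
Proof.
intros Hr H.
set (lim := fun i => epsilon (inhabits 0) (fun l => forall k, Rabs (l - u k i) <= r k)).
exists lim. intros k i. revert k.
apply (epsilon_spec (inhabits 0) (fun l => forall k, Rabs (l - u k i) <= r k)).
apply cauchy_lim; auto.
Qed.

Lemma fin_min : forall n (Q : Fin.t n -> R -> Prop),
  (forall i e e', 0 < e' <= e -> Q i e -> Q i e') ->
  (forall i, exists e, 0 < e /\ Q i e) -> exists e, 0 < e /\ forall i, Q i e.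
Proof.
induction n as [|n IH]; intros Q Hm H.
- exists 1. split. lra. intros i. apply (Fin.case0 (fun i => Q i 1) i).
- destruct (H Fin.F1) as [e1 [He1 Q1]].
  destruct (IH (fun i => Q (Fin.FS i))) as [e2 [He2 Q2]].
  + intros i e e' He. apply Hm; auto.
  + intros i. apply H.
  + exists (Rmin e1 e2). split. apply Rmin_glb_lt; auto.
    intros i. apply (Fin.caseS' i (fun i => Q i (Rmin e1 e2))).
    * apply (Hm _ e1); auto. split. apply Rmin_glb_lt; auto. apply Rmin_l.
    * intros p. apply (Hm _ e2); auto. split. apply Rmin_glb_lt; auto. apply Rmin_r.
Qed.

Definition fcons {n} {A : Type} (a : A) (f : Fin.t n -> A) : Fin.t (S n) -> A :=
  fun i => Fin.caseS' i (fun _ => A) a f.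

Lemma fcons_eta : forall n A (f : Fin.t (S n) -> A), f = fcons (f Fin.F1) (fun i => f (Fin.FS i)).
Proof.
intros n A f. extensionality i. apply (Fin.caseS' i (fun i => f i = fcons (f Fin.F1) (fun i => f (Fin.FS i)) i)); reflexivity.
Qed.

Lemma fin_bool_max : forall n (Q : (Fin.t n -> bool) -> nat -> Prop),
  (forall s N N', (N <= N')%nat -> Q s N -> Q s N') ->
  (forall s, exists N, Q s N) -> exists N, forall s, Q s N.
Proof.
induction n as [|n IH]; intros Q Hm H.
- destruct (H (fun _ => true)) as [N HN]. exists N. intros s.
  replace s with (fun _ : Fin.t 0 => true); auto.
  extensionality i. apply (Fin.case0 (fun i => true = s i) i).
- destruct (IH (fun t N => Q (fcons true t) N /\ Q (fcons false t) N)) as [N HN].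
  + intros s N N' HN [H1 H2]. split; eapply Hm; eauto.
  + intros t. destruct (H (fcons true t)) as [N1 H1]. destruct (H (fcons false t)) as [N2 H2].
    exists (max N1 N2). split; [apply (Hm _ N1); [lia|exact H1] | apply (Hm _ N2); [lia|exact H2]].
  + exists N. intros s. rewrite (fcons_eta n bool s).
    destruct (s Fin.F1); apply HN.
Qed.

Section Meager.
Variable n : nat.

Lemma nowhere_dense_scale : forall (N : set_ n) r, r <> 0 -> nowhere_dense N ->
  nowhere_dense (fun y => N (fun i => r * y i)).
Proof.
intros N r Hr HN x rho Hrho.
assert (Har : 0 < Rabs r) by (apply Rabs_pos_lt; auto).
destruct (HN (fun i => r * x i) (Rabs r * rho)) as [y' [rho' [Hp [Hsub Hav]]]].
{ apply Rmult_lt_0_compat; auto. }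
assert (Key : forall z, ball (fun i => y' i / r) (rho' / Rabs r) z -> ball y' rho' (fun i => r * z i)).
{ intros z Hz i. specialize (Hz i). simpl in Hz. rewrite Rabs_mul_sub by auto.
  apply (Rmult_lt_compat_l (Rabs r)) in Hz; auto.
  replace (Rabs r * (rho' / Rabs r)) with rho' in Hz by (field; lra). exact Hz. }
exists (fun i => y' i / r), (rho' / Rabs r). split; [|split].
- apply Rdiv_lt_0_compat; auto.
- intros z Hz i. specialize (Hsub _ (Key z Hz) i). simpl in Hsub.
  rewrite Rabs_mul_sub in Hsub by auto.
  replace (r * x i / r) with (x i) in Hsub by (field; auto).
  apply (Rmult_lt_reg_l (Rabs r)); auto.
- intros z Hz. apply Hav. apply Key, Hz.
Qed.

Lemma meager_sub : forall A B : set_ n, subset_ A B -> meager n B -> meager n A.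
Proof. intros A B Hs [N [H1 H2]]. exists N. split; auto. Qed.

Lemma meager_scale : forall (r : R) (A : set_ n), r <> 0 -> meager n A ->
  meager n (fun y => A (fun i => r * y i)).
Proof.
intros r A Hr [N [H1 H2]]. exists (fun k => fun y => N k (fun i => r * y i)). split.
- intros k. apply nowhere_dense_scale; auto.
- intros x Hx. apply H2, Hx.
Qed.

(* Countable unions: merge the countably many countable families via the
   Cantor pairing. *)
Lemma meager_cunion : forall A : nat -> set_ n, (forall k, meager n (A k)) ->
  meager n (fun x => exists k, A k x).
Proof.
intros A H.
set (F := fun k => epsilon (inhabits (fun _ : nat => fun _ : pt n => False))
  (fun N => (forall j, nowhere_dense (N j)) /\ forall x, A k x -> exists j, N j x)).
assert (HF : forall k, (forall j, nowhere_dense (F k j)) /\ forall x, A k x -> exists j, F k j x).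
{ intros k. apply epsilon_spec. apply H. }
exists (fun m => let (k, j) := of_nat m in F k j). split.
- intros m. destruct (of_nat m) as [k j]. apply HF.
- intros x [k Hk]. destruct (proj2 (HF k) x Hk) as [j Hj].
  exists (to_nat (k, j)). rewrite cancel_of_to. exact Hj.
Qed.

Lemma meager_union2 : forall A B : set_ n, meager n A -> meager n B -> meager n (fun x => A x \/ B x).
Proof.
intros A B HA HB. apply (meager_sub _ (fun x => exists k, (match k with O => A | _ => B end) x)).
- intros x [Hx|Hx]; [exists O|exists 1%nat]; auto.
- apply meager_cunion. intros [|k]; auto.
Qed.

Hypothesis Hn : (1 <= n)%nat.

Lemma nowhere_dense_single : forall p : pt n, nowhere_dense (fun x => x = p).
Proof.
intros p x r Hr.
set (y := fun i => x i + (if Rle_dec (p i) (x i) then r/2 else - (r/2))).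
exists y, (r/4). split; [lra|split].
- intros z Hz i. specialize (Hz i). simpl in Hz. unfold y in Hz.
  destruct (Rle_dec (p i) (x i)); apply Rabs_def2 in Hz; apply Rabs_def1; lra.
- intros z Hz E. subst z. destruct n as [|m]; [lia|].
  specialize (Hz Fin.F1). unfold y in Hz.
  destruct (Rle_dec (p Fin.F1) (x Fin.F1)); apply Rabs_def2 in Hz; lra.
Qed.

Lemma meager_single : forall p : pt n, meager n (fun x => x = p).
Proof.
intros p. exists (fun _ => fun x => x = p). split.
- intros _. apply nowhere_dense_single.
- intros x Hx. exists O. exact Hx.
Qed.

(* Given nowhere dense sets N_k,
   choose nested balls B_{k+1} ⊆ B_k avoiding N_k with radii <= 2^-(k+1)
   and at most half the radius of the ball given by nowhere density; their
   common point lies in no N_k. *)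
Theorem meager_full : ~ meager n (fun _ => True).
Proof.
intros [Nk [Hnd Hcov]].
set (avoids := fun (k : nat) (yr yr' : pt n * R) => 0 < snd yr' /\
   subset_ (ball (fst yr') (snd yr')) (ball (fst yr) (snd yr)) /\
   forall z, ball (fst yr') (snd yr') z -> ~ Nk k z).
set (nx := fun k yr => epsilon (inhabits yr) (avoids k yr)).
set (step := fun k yr => (fst (nx k yr), Rmin (snd (nx k yr) / 2) ((1/2)^(S k)))).
set (sq := fix sq k := match k with O => ((fun _ : Fin.t n => 0), 1) | S k => step k (sq k) end).
assert (Hnx : forall k yr, 0 < snd yr -> avoids k yr (nx k yr)).
{ intros k [y r] Hr. apply epsilon_spec. simpl in Hr.
  destruct (Hnd k y r Hr) as [y' [r' [H1 [H2 H3]]]]. exists (y', r'). split; auto. }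
assert (Hpos : forall k, 0 < snd (sq k) /\ snd (sq k) <= (1/2)^k).
{ induction k as [|k IH]; simpl. lra.
  destruct (Hnx k (sq k) (proj1 IH)) as [Hp _]. split.
  - apply Rmin_glb_lt. lra. apply (half_pow_pos (S k)).
  - apply Rmin_r. }
assert (Hnest1 : forall k, subset_ (ball (fst (sq (S k))) (snd (sq (S k)))) (ball (fst (sq k)) (snd (sq k)))).
{ intros k z Hz. destruct (Hnx k (sq k) (proj1 (Hpos k))) as [Hp [Hs _]].
  apply Hs. intros i. specialize (Hz i). change (sq (S k)) with (step k (sq k)) in Hz.
  unfold step in Hz. cbn [fst snd] in Hz.
  pose proof (Rmin_l (snd (nx k (sq k)) / 2) ((1/2)^(S k))). lra. }
assert (Hnest : forall k m, (k <= m)%nat -> subset_ (ball (fst (sq m)) (snd (sq m))) (ball (fst (sq k)) (snd (sq k)))).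
{ intros k m Hkm. induction Hkm. intros z Hz; exact Hz.
  intros z Hz. apply IHHkm, Hnest1, Hz. }
destruct (nested_limit (fun k => fst (sq k)) (fun k => snd (sq k))) as [p Hp].
- intros k. apply Hpos.
- intros k m i Hkm. apply Rlt_le. apply (Hnest k m Hkm).
  intros j. rewrite Rminus_diag, Rabs_R0. apply Hpos.
- destruct (Hcov p Logic.I) as [k Hk].
  destruct (Hnx k (sq k) (proj1 (Hpos k))) as [Hp1 [_ Hav]].
  apply (Hav p); auto. intros i. specialize (Hp (S k) i). change (sq (S k)) with (step k (sq k)) in Hp.
  unfold step in Hp. cbn [fst snd] in Hp.
  pose proof (Rmin_l (snd (nx k (sq k)) / 2) ((1/2)^(S k))). lra.
Qed.

End Meager.

Definition sumlist {A : Type} (f : A -> R) (l : list A) : R := fold_right (fun x acc => f x + acc) 0 l.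

Lemma sumlist_app {A} (f : A -> R) l1 l2 : sumlist f (l1 ++ l2) = sumlist f l1 + sumlist f l2.
Proof. induction l1; simpl; [ring|rewrite IHl1; ring]. Qed.

Lemma sumlist_map {A B} (f : B -> R) (h : A -> B) l : sumlist f (map h l) = sumlist (fun x => f (h x)) l.
Proof. induction l; simpl; auto. rewrite IHl; auto. Qed.

Lemma sumlist_nonneg {A} (f : A -> R) l : (forall x, 0 <= f x) -> 0 <= sumlist f l.
Proof. intros H. induction l; simpl. lra. pose proof (H a). lra. Qed.

Lemma sumlist_le {A} (f g : A -> R) l : (forall x, In x l -> f x <= g x) -> sumlist f l <= sumlist g l.
Proof. induction l; simpl; intros H. lra. pose proof (H a (or_introl eq_refl)).
  assert (sumlist f l <= sumlist g l) by (apply IHl; auto). lra. Qed.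

Lemma sumlist_seq (g : nat -> R) M : sumlist g (seq 0 (S M)) = sum_f_R0 g M.
Proof.
induction M as [|M IH]. simpl. ring.
rewrite seq_S, sumlist_app, IH. simpl. ring.
Qed.

Lemma sum_zero : forall N, sum_f_R0 (fun _ => 0) N = 0.
Proof. induction N; simpl; auto. rewrite IHN; ring. Qed.

Lemma sumlist_swap {A} (h : nat -> A -> R) L M :
  sum_f_R0 (fun j => sumlist (h j) L) M = sumlist (fun x => sum_f_R0 (fun j => h j x) M) L.
Proof.
induction L as [|x L IH]; simpl.
- apply sum_zero.
- rewrite <- IH. rewrite <- sum_plus. reflexivity.
Qed.

Lemma sumlist_incl {A} (f : A -> R) : forall L L2, NoDup L -> incl L L2 -> (forall x, 0 <= f x) ->
  sumlist f L <= sumlist f L2.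
Proof.
induction L as [|a L IH]; intros L2 Hnd Hin Hf; simpl.
- apply sumlist_nonneg; auto.
- assert (Ha : In a L2) by (apply Hin; simpl; auto).
  apply in_split in Ha. destruct Ha as [l1 [l2 ->]].
  inversion Hnd; subst.
  assert (sumlist f L <= sumlist f (l1 ++ l2)).
  { apply IH; auto. intros x Hx. assert (In x (l1 ++ a :: l2)) by (apply Hin; simpl; auto).
    apply in_app_or in H. apply in_or_app. destruct H as [H|[H|H]]; auto. subst; contradiction. }
  rewrite !sumlist_app in *. simpl. lra.
Qed.

Lemma sum_lt : forall (f g : nat -> R) N, (forall k, f k < g k) -> sum_f_R0 f N < sum_f_R0 g N.
Proof. intros f g N H. induction N; simpl. apply H. pose proof (H (S N)). lra. Qed.

Definition square (M : nat) : list (nat * nat) :=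
  flat_map (fun k => map (fun j => (k, j)) (seq 0 (S M))) (seq 0 (S M)).

Lemma sumlist_square (g : nat * nat -> R) M :
  sumlist g (square M) = sum_f_R0 (fun k => sum_f_R0 (fun j => g (k, j)) M) M.
Proof.
unfold square. rewrite <- sumlist_seq.
assert (Hrows : forall K, sumlist g (flat_map (fun k => map (fun j => (k, j)) (seq 0 (S M))) (seq 0 K))
  = sumlist (fun k => sum_f_R0 (fun j => g (k, j)) M) (seq 0 K)).
{ induction K as [|K IH]; auto.
  rewrite (seq_S K 0), flat_map_app, !sumlist_app, IH. cbn [flat_map sumlist plus].
  rewrite app_nil_r, sumlist_map, sumlist_seq. simpl. ring. }
apply Hrows.
Qed.

(* The first M+1 terms of the Cantor enumeration of nat x nat lie in the square
   [0, M]^2, so for nonnegative terms the diagonal sum is bounded by the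
   double sum. *)
Lemma diagonal_sum_bound (g : nat * nat -> R) M : (forall p, 0 <= g p) ->
  sum_f_R0 (fun m => g (of_nat m)) M <= sum_f_R0 (fun k => sum_f_R0 (fun j => g (k, j)) M) M.
Proof.
intros Hg. rewrite <- sumlist_square, <- sumlist_seq, <- (sumlist_map g of_nat).
apply sumlist_incl; auto.
- apply FinFun.Injective_map_NoDup; [|apply seq_NoDup].
  intros a b E. rewrite <- (cancel_to_of a), <- (cancel_to_of b), E. reflexivity.
- intros [k j] Hp. apply in_map_iff in Hp. destruct Hp as [m [Em Hm]].
  apply in_seq in Hm. pose proof (to_nat_non_decreasing k j) as Hnd.
  rewrite <- Em, cancel_to_of in Hnd.
  apply in_flat_map. exists k. split; [apply in_seq; lia|].
  apply in_map. apply in_seq. lia.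
Qed.

Section Null.
Variable n : nat.

Lemma null_sub : forall A B : set_ n, subset_ A B -> null_set n B -> null_set n A.
Proof.
intros A B Hs HB eps He. destruct (HB eps He) as [c [s [H1 [H2 H3]]]].
exists c, s. split; auto.
Qed.

(* Dilating by 1/r rescales the covering cubes and their volumes by |r|^-n. *)
Lemma null_scale : forall (r : R) (A : set_ n), r <> 0 -> null_set n A ->
  null_set n (fun y => A (fun i => r * y i)).
Proof.
intros r A Hr HA eps He.
assert (Har : 0 < Rabs r) by (apply Rabs_pos_lt; auto).
assert (Hrn : 0 < Rabs r ^ n) by (apply pow_lt; auto).
destruct (HA (eps * Rabs r ^ n)) as [c [s [H1 [H2 H3]]]].
{ apply Rmult_lt_0_compat; auto. }
exists (fun k i => c k i / r), (fun k => s k / Rabs r). split; [|split].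
- intros k. unfold Rdiv. apply Rmult_le_pos; [apply H1|left; apply Rinv_0_lt_compat; auto].
- intros y Hy. destruct (H2 _ Hy) as [k Hk]. exists k. intros i. specialize (Hk i).
  simpl in Hk. rewrite (Rabs_mul_sub r) in Hk by auto.
  apply (Rmult_le_reg_l (Rabs r)); auto.
  replace (Rabs r * (s k / Rabs r / 2)) with (s k / 2) by (field; lra). exact Hk.
- intros N. specialize (H3 N).
  replace (sum_f_R0 (fun k => (s k / Rabs r) ^ n) N) with (/ Rabs r ^ n * sum_f_R0 (fun k => s k ^ n) N).
  + apply (Rmult_lt_reg_l (Rabs r ^ n)); auto. rewrite <- Rmult_assoc, Rinv_r by lra. lra.
  + rewrite scal_sum. apply sum_eq. intros k _. unfold Rdiv. rewrite Rpow_mult_distr, pow_inv. ring.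
Qed.

(* Countable unions: cover A k within eps 2^-(k+1) and merge the covers via
   the Cantor pairing. *)
Lemma null_cunion : forall A : nat -> set_ n, (forall k, null_set n (A k)) ->
  null_set n (fun x => exists k, A k x).
Proof.
intros A HA eps He.
set (covers := fun k (cs : (nat -> pt n) * (nat -> R)) => (forall j, 0 <= snd cs j) /\
   (forall x, A k x -> exists j, cube (fst cs j) (snd cs j) x) /\
   (forall N, sum_f_R0 (fun j => snd cs j ^ n) N < eps * (1/2)^(S k))).
set (F := fun k => epsilon (inhabits ((fun _ : nat => fun _ : Fin.t n => 0), (fun _ : nat => 0))) (covers k)).
assert (HF : forall k, covers k (F k)).
{ intros k. apply epsilon_spec. destruct (HA k (eps * (1/2)^(S k))) as [c [s Hcs]].
  apply Rmult_lt_0_compat; auto. apply half_pow_pos. exists (c, s). exact Hcs. }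
exists (fun m => let (k, j) := of_nat m in fst (F k) j), (fun m => let (k, j) := of_nat m in snd (F k) j).
split; [|split].
- intros m. destruct (of_nat m) as [k j]. apply HF.
- intros x [k Hk]. destruct (proj1 (proj2 (HF k)) x Hk) as [j Hj].
  exists (to_nat (k, j)). rewrite cancel_of_to. exact Hj.
- intros M.
  set (g := fun p : nat * nat => let (k, j) := p in snd (F k) j ^ n).
  replace (sum_f_R0 _ M) with (sum_f_R0 (fun m => g (of_nat m)) M)
    by (apply sum_eq; intros m _; unfold g; destruct (of_nat m); auto).
  eapply Rle_lt_trans; [apply diagonal_sum_bound; intros [k j]; apply pow_le, HF|].
  apply Rlt_le_trans with (sum_f_R0 (fun k => eps * (1/2)^(S k)) M).
  + apply sum_lt. intros k. apply HF.
  + rewrite (sum_eq _ (fun k => (1/2)^(S k) * eps)) by (intros; ring).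
    rewrite <- scal_sum, geom_half. pose proof (half_pow_pos (S M)).
    assert (eps * (1 - (1/2)^(S M)) <= eps * 1) by (apply Rmult_le_compat_l; lra). lra.
Qed.

Lemma null_union2 : forall A B : set_ n, null_set n A -> null_set n B -> null_set n (fun x => A x \/ B x).
Proof.
intros A B HA HB. apply (null_sub _ (fun x => exists k, (match k with O => A | _ => B end) x)).
- intros x [Hx|Hx]; [exists O|exists 1%nat]; auto.
- apply null_cunion. intros [|k]; auto.
Qed.

Hypothesis Hn : (1 <= n)%nat.

Lemma null_single : forall p : pt n, null_set n (fun x => x = p).
Proof.
intros p eps He. exists (fun _ => p), (fun _ => 0). split; [|split].
- intros; lra.
- intros x ->. exists O. intros i. rewrite Rminus_diag, Rabs_R0. lra.
- intros N. rewrite (sum_eq _ (fun _ => 0)). rewrite sum_zero. auto.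
  intros k _. destruct n; [lia|]. simpl. ring.
Qed.

End Null.

Lemma count_in_interval : forall (Q : nat -> Prop) (dec : forall j, {Q j} + {~ Q j}) a b,
  a - 1 <= b -> (forall j, Q j -> a <= INR j <= b) -> forall M,
  sum_f_R0 (fun j => if dec j then 1 else 0) M <= Rmax 0 (Rmin (INR M) b - a + 1).
Proof.
intros Q dec a b Hab HQ M. induction M as [|M IH].
- simpl. destruct (dec 0%nat) as [q|q].
  + specialize (HQ _ q). simpl in HQ. unfold Rmax, Rmin.
    destruct (Rle_dec 0 b); destruct (Rle_dec 0 (0 - a + 1)); lra.
  + unfold Rmax. destruct (Rle_dec 0 _); lra.
- simpl sum_f_R0. rewrite S_INR. destruct (dec (S M)) as [q|q].
  + specialize (HQ _ q). rewrite S_INR in HQ. pose proof (pos_INR M).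
    revert IH. unfold Rmax, Rmin.
    destruct (Rle_dec (INR M) b); destruct (Rle_dec (INR M + 1) b);
    destruct (Rle_dec 0 (INR M - a + 1)); destruct (Rle_dec 0 (INR M + 1 - a + 1));
    destruct (Rle_dec 0 (b - a + 1)); intros; lra.
  + revert IH. unfold Rmax, Rmin.
    destruct (Rle_dec (INR M) b); destruct (Rle_dec (INR M + 1) b);
    destruct (Rle_dec 0 (INR M - a + 1)); destruct (Rle_dec 0 (INR M + 1 - a + 1));
    destruct (Rle_dec 0 (b - a + 1)); destruct (Rle_dec 0 (INR M - a + 1));
    intros; lra.
Qed.

Definition lattice_in (m : nat) (a w : R) (j : nat) : R :=
  if Rle_dec (Rabs (INR j / INR m - a)) (w / 2) then 1 else 0.

Lemma lattice_in_count : forall m a w, (1 <= m)%nat -> 0 <= w ->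
  sum_f_R0 (lattice_in m a w) m <= w * INR m + 1.
Proof.
intros m a w Hm Hw.
assert (Hm' : 0 < INR m) by (apply lt_0_INR; lia).
set (al := INR m * a - INR m * w / 2). set (be := INR m * a + INR m * w / 2).
assert (H := count_in_interval (fun j => Rabs (INR j / INR m - a) <= w / 2)
  (fun j => Rle_dec (Rabs (INR j / INR m - a)) (w / 2)) al be).
assert (Hab : al - 1 <= be).
{ unfold al, be. assert (0 <= INR m * w) by (apply Rmult_le_pos; lra). lra. }
specialize (H Hab).
assert (HQ : forall j, Rabs (INR j / INR m - a) <= w / 2 -> al <= INR j <= be).
{ intros j Hj. unfold al, be.
  assert (H1 : a - w / 2 <= INR j / INR m) by (revert Hj; unfold Rabs; destruct (Rcase_abs _); intros; lra).
  assert (H2 : INR j / INR m <= a + w / 2) by (revert Hj; unfold Rabs; destruct (Rcase_abs _); intros; lra).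
  apply (Rmult_le_compat_l (INR m)) in H1; [|lra]. apply (Rmult_le_compat_l (INR m)) in H2; [|lra].
  replace (INR m * (INR j / INR m)) with (INR j) in * by (field; lra).
  split; nra. }
specialize (H HQ m). unfold lattice_in.
eapply Rle_trans. apply H.
unfold Rmax, Rmin. unfold al, be in *.
destruct (Rle_dec (INR m) _); destruct (Rle_dec 0 _); nra.
Qed.

Definition grid (m : nat) {n} (p : pt n) := forall i, exists j, (j <= m)%nat /\ p i = INR j / INR m.

Definition tailp {n} (c : pt (S n)) : pt n := fun i => c (Fin.FS i).

Definition slice {n} (m j : nat) (L : list (pt (S n) * R)) : list (pt n * R) :=
  flat_map (fun cw => if Rle_dec (Rabs (INR j / INR m - fst cw Fin.F1)) (snd cw / 2)
                      then (tailp (fst cw), snd cw) :: nil else nil) L.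

Lemma slice_sum {n} (m j : nat) (L : list (pt (S n) * R)) :
  sumlist (fun cw => (snd cw * INR m + 1) ^ n) (slice m j L) =
  sumlist (fun cw => lattice_in m (fst cw Fin.F1) (snd cw) j * (snd cw * INR m + 1) ^ n) L.
Proof.
unfold slice. induction L as [|[c w] L IH]; simpl; auto.
rewrite sumlist_app, IH. unfold lattice_in. simpl. destruct (Rle_dec _ _); simpl; ring.
Qed.

Lemma slice_covers {n} (m j : nat) (L : list (pt (S n) * R)) : (j <= m)%nat ->
  (forall p : pt (S n), grid m p -> exists cw, In cw L /\ cube (fst cw) (snd cw) p) ->
  forall p : pt n, grid m p -> exists cw, In cw (slice m j L) /\ cube (fst cw) (snd cw) p.
Proof.
intros Hjm Hcov p' Hp'. destruct (Hcov (fcons (INR j / INR m) p')) as [[c w] [Hin Hc]].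
- intros i. apply (Fin.caseS' i (fun i => exists j0, (j0 <= m)%nat /\ fcons (INR j / INR m) p' i = INR j0 / INR m)).
  exists j; auto. intros i'. apply Hp'.
- exists (tailp c, w). split.
  + unfold slice. apply in_flat_map. exists (c, w). split; auto. simpl.
    destruct (Rle_dec _ _) as [_|C]; [simpl; auto|]. exfalso. apply C. apply (Hc Fin.F1).
  + intros i. apply (Hc (Fin.FS i)).
Qed.

(* If closed cubes of sides w cover the lattice points of mesh 1/m, then
   (m+1)^n <= sum (w m + 1)^n: a cube of side w contains at most (w m + 1)^n
   lattice points.  By induction on n, slicing along the first coordinate. *)
Lemma lattice_cover_count : forall n m (L : list (pt n * R)), (1 <= m)%nat ->
  (forall cw, In cw L -> 0 <= snd cw) ->
  (forall p : pt n, grid m p -> exists cw, In cw L /\ cube (fst cw) (snd cw) p) ->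
  (INR m + 1) ^ n <= sumlist (fun cw => (snd cw * INR m + 1) ^ n) L.
Proof.
induction n as [|n IH]; intros m L Hm Hpos Hcov.
- destruct (Hcov (fun _ => 0)) as [cw [Hin _]].
  { intros i. apply (Fin.case0 (fun i => exists j, (j <= m)%nat /\ 0 = INR j / INR m) i). }
  destruct L as [|a L]; [destruct Hin|].
  simpl. assert (0 <= sumlist (fun _ : pt 0 * R => 1) L) by (apply sumlist_nonneg; intros; lra).
  lra.
- assert (Hm' : 0 < INR m) by (apply lt_0_INR; lia).
  assert (Hj : forall j, (j <= m)%nat ->
     (INR m + 1) ^ n <= sumlist (fun cw => lattice_in m (fst cw Fin.F1) (snd cw) j * (snd cw * INR m + 1) ^ n) L).
  { intros j Hjm. rewrite <- slice_sum. apply IH; auto.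
    - intros cw Hcw. unfold slice in Hcw. apply in_flat_map in Hcw. destruct Hcw as [cw0 [H0 H1]].
      destruct (Rle_dec _ _); [|destruct H1]. destruct H1 as [<-|[]]. apply Hpos, H0.
    - apply slice_covers; auto. }
  apply Rle_trans with (sum_f_R0 (fun j => sumlist (fun cw => lattice_in m (fst cw Fin.F1) (snd cw) j * (snd cw * INR m + 1) ^ n) L) m).
  + apply Rle_trans with (sum_f_R0 (fun _ => (INR m + 1) ^ n) m).
    * rewrite sum_cte. rewrite S_INR. simpl. lra.
    * apply sum_Rle. intros j Hj'. apply Hj; auto.
  + rewrite sumlist_swap. apply sumlist_le. intros [c w] Hin. simpl.
    rewrite <- scal_sum.
    assert (Hw : 0 <= w) by (apply (Hpos (c, w)), Hin).
    pose proof (lattice_in_count m (c Fin.F1) w Hm Hw).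
    assert (0 <= (w * INR m + 1) ^ n) by (apply pow_le; nra).
    rewrite Rmult_comm. apply Rmult_le_compat_r; auto.
Qed.

Section HeineBorel.
Variable n : nat.
Variable c : nat -> pt n.
Variable t : nat -> R.

Definition ocube (cc : pt n) (tt : R) (x : pt n) := forall i, Rabs (x i - cc i) < tt / 2.
Definition box (a : pt n) (h : R) (x : pt n) := forall i, a i <= x i <= a i + h.
Definition finitely_covered (a : pt n) (h : R) :=
  exists N, forall x, box a h x -> exists k, (k < N)%nat /\ ocube (c k) (t k) x.
Definition subbox (a : pt n) (h : R) (s : Fin.t n -> bool) : pt n :=
  fun i => a i + (if s i then h / 2 else 0).

Lemma finitely_covered_split : forall a h, 0 <= h ->
  (forall s, finitely_covered (subbox a h s) (h / 2)) -> finitely_covered a h.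
Proof.
intros a h Hh H.
destruct (fin_bool_max n (fun s N => forall x, box (subbox a h s) (h/2) x ->
  exists k, (k < N)%nat /\ ocube (c k) (t k) x)) as [N HN].
- intros s N N' HNN HQ x Hx. destruct (HQ x Hx) as [k [Hk Hc]]. exists k. split; auto. lia.
- intros s. apply H.
- exists N. intros x Hx.
  apply (HN (fun i => if Rle_dec (x i) (a i + h / 2) then false else true)).
  intros i. unfold subbox. specialize (Hx i). destruct (Rle_dec (x i) (a i + h / 2)); lra.
Qed.

Hypothesis covering : forall x, exists k, ocube (c k) (t k) x.

(* Bisection: if the unit cube were not finitely covered, some sub-box of each
   stage would not be either; the nested boxes shrink to a point p, and the
   open cube containing p contains all sufficiently small boxes around it. *)
Theorem unit_cube_finitely_covered : finitely_covered (fun _ => 0) 1.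
Proof.
apply NNPP. intros Hnfc.
set (bad := fun (ah : pt n * R) => epsilon (inhabits (fun _ : Fin.t n => true))
   (fun s => ~ finitely_covered (subbox (fst ah) (snd ah) s) (snd ah / 2))).
set (sq := fix sq k := match k with O => ((fun _ : Fin.t n => 0), 1)
   | S k => (subbox (fst (sq k)) (snd (sq k)) (bad (sq k)), snd (sq k) / 2) end).
assert (Hh : forall k, snd (sq k) = (1/2)^k).
{ induction k; simpl; auto. rewrite IHk. field. }
assert (Hnf : forall k, ~ finitely_covered (fst (sq k)) (snd (sq k))).
{ induction k as [|k IH]; auto.
  change (~ finitely_covered (subbox (fst (sq k)) (snd (sq k)) (bad (sq k))) (snd (sq k) / 2)).
  apply (epsilon_spec (inhabits (fun _ : Fin.t n => true))
    (fun s => ~ finitely_covered (subbox (fst (sq k)) (snd (sq k)) s) (snd (sq k) / 2))).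
  apply NNPP. intros C. apply IH. apply finitely_covered_split.
  rewrite Hh. left; apply half_pow_pos.
  intros s. apply NNPP. intros C'. apply C. exists s. exact C'. }
assert (Hnest : forall k m i, (k <= m)%nat ->
  fst (sq k) i <= fst (sq m) i /\ fst (sq m) i + snd (sq m) <= fst (sq k) i + snd (sq k)).
{ intros k m i Hkm. induction Hkm as [|m Hkm IH]; [lra|]. simpl. unfold subbox.
  pose proof (Hh m). pose proof (half_pow_pos m). destruct (bad (sq m) i); lra. }
destruct (nested_limit (fun k => fst (sq k)) (fun k => (1/2)^k)) as [p Hp].
{ intros k; lra. }
{ intros k m i Hkm. pose proof (Hnest k m i Hkm). pose proof (Hh k). pose proof (Hh m).
  pose proof (half_pow_pos m). rewrite Rabs_right; lra. }
destruct (covering p) as [k0 Hk0].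
destruct (fin_min n (fun i e => Rabs (p i - c k0 i) + e < t k0 / 2)) as [mu [Hmu Hmu']].
{ intros i e e' [H1 H2] H3. lra. }
{ intros i. exists ((t k0 / 2 - Rabs (p i - c k0 i)) / 2). specialize (Hk0 i). split; lra. }
destruct (half_pow_small (mu / 2)) as [K HK]. lra.
apply (Hnf K). exists (S k0). intros x Hx. exists k0. split. lia.
intros i. specialize (Hx i). specialize (Hp K i). specialize (Hmu' i). rewrite Hh in Hx.
replace (x i - c k0 i) with ((x i - p i) + (p i - c k0 i)) by ring.
eapply Rle_lt_trans. apply Rabs_triang.
assert (Rabs (x i - p i) <= 2 * (1/2)^K).
{ revert Hp. unfold Rabs. destruct (Rcase_abs (p i - _)); destruct (Rcase_abs (x i - p i)); intros; lra. }
lra.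
Qed.
End HeineBorel.

Lemma enlarged_count_bound : forall n s d x, 0 <= s -> 0 < d -> 1 <= d * x ->
  (2 * Rmax s d * x + 1) ^ n <= (4 * x) ^ n * (s ^ n + d ^ n).
Proof.
intros n s d x Hs Hd Hdx.
assert (Hmax : d <= Rmax s d) by apply Rmax_r.
assert (Hx : 0 < x) by nra.
apply Rle_trans with ((2 * (2 * Rmax s d * x)) ^ n); [apply pow_incr; nra|].
replace (2 * (2 * Rmax s d * x)) with ((4 * x) * Rmax s d) by ring.
rewrite Rpow_mult_distr. apply Rmult_le_compat_l; [apply pow_le; lra|].
apply max_pow; lra.
Qed.

Lemma enlarged_sum_bound : forall n (s d : nat -> R) x N, (forall k, 0 <= s k) ->
  (forall k, 0 < d k <= 1) -> (1 <= n)%nat -> (forall k, (k <= N)%nat -> 1 <= d k * x) ->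
  sum_f_R0 (fun k => (2 * Rmax (s k) (d k) * x + 1) ^ n) N <=
  (4 * x) ^ n * (sum_f_R0 (fun k => s k ^ n) N + sum_f_R0 d N).
Proof.
intros n s d x N Hs Hd Hn Hdx.
assert (Hx : 0 < x) by (pose proof (Hdx 0%nat (Nat.le_0_l N)); pose proof (Hd 0%nat); nra).
rewrite <- sum_plus, scal_sum. apply sum_Rle. intros k Hk.
apply Rle_trans with ((4 * x) ^ n * (s k ^ n + d k ^ n)).
- apply enlarged_count_bound; [apply Hs|apply Hd|apply Hdx, Hk].
- rewrite (Rmult_comm (_ + d k)). apply Rmult_le_compat_l; [apply pow_le; lra|].
  apply Rplus_le_compat_l. apply pow_le_self; auto. split; [left|]; apply Hd.
Qed.

Lemma fine_mesh : forall d, 0 < d -> exists m, (1 <= m)%nat /\ 1 < d * INR m.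
Proof.
intros d Hd. destruct (INR_unbounded (/ d + 1)) as [m Hm].
assert (Hinv : 0 < / d) by (apply Rinv_0_lt_compat; auto).
exists m. split.
- destruct m; [change (INR 0) with 0 in Hm; lra|lia].
- apply (Rmult_lt_reg_l (/ d)); auto. rewrite <- Rmult_assoc, Rinv_l by lra. lra.
Qed.

Lemma unit_cube_count : forall n m N (c : nat -> pt n) (t : nat -> R), (1 <= m)%nat ->
  (forall k, 0 <= t k) ->
  (forall x, box n (fun _ => 0) 1 x -> exists k, (k < S N)%nat /\ ocube n (c k) (t k) x) ->
  (INR m + 1) ^ n <= sum_f_R0 (fun k => (t k * INR m + 1) ^ n) N.
Proof.
intros n m N c t Hm1 Ht HN.
assert (Hmpos : 0 < INR m) by (apply lt_0_INR; lia).
rewrite <- sumlist_seq, <- (sumlist_map (fun cw => (snd cw * INR m + 1) ^ n) (fun k => (c k, t k))).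
apply lattice_cover_count; auto.
- intros cw Hcw. apply in_map_iff in Hcw. destruct Hcw as [k [<- _]]. apply Ht.
- intros p Hp. destruct (HN p) as [k [Hk Hpk]].
  + intros i. destruct (Hp i) as [j [Hj Ej]]. rewrite Ej.
    pose proof (pos_INR j). apply le_INR in Hj. split.
    * apply Rmult_le_pos; auto. left; apply Rinv_0_lt_compat; auto.
    * apply (Rmult_le_reg_l (INR m)); auto. replace (INR m * (INR j / INR m)) with (INR j) by (field; lra). lra.
  + exists (c k, t k). split.
    * apply (in_map (fun k => (c k, t k))). apply in_seq. lia.
    * intros i. left. apply Hpk.
Qed.

(* Cover R^n by cubes of total volume < eps =
   4^-(n+1), enlarge them to open cubes of sides t_k = 2 max(s_k, eps 2^-k),
   extract a finite cover of [0,1]^n, and count lattice points of mesh 1/m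
   for m large: (m+1)^n <= sum (t_k m + 1)^n <= (4m)^n * 3 eps < m^n. *)
Theorem null_full : forall n, (1 <= n)%nat -> ~ null_set n (fun _ => True).
Proof.
intros n Hn Hnull.
assert (H4 : 0 < 4 ^ n) by (apply pow_lt; lra).
set (eps := / (4 * 4 ^ n)).
assert (Heps : 0 < eps) by (unfold eps; apply Rinv_0_lt_compat; lra).
assert (Heps1 : eps <= 1).
{ unfold eps. assert (1 <= 4 ^ n) by (apply pow_R1_Rle; lra).
  rewrite <- Rinv_1. apply Rinv_le_contravar; lra. }
destruct (Hnull eps Heps) as [c [s [Hs [Hcov Hsum]]]].
set (d := fun k => eps * (1/2)^k).
assert (Hd : forall k, 0 < d k <= 1).
{ intros k. unfold d. pose proof (half_pow_pos k). pose proof (half_pow_le 0 k (Nat.le_0_l k)).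
  simpl in *. split; nra. }
set (t := fun k => 2 * Rmax (s k) (d k)).
destruct (unit_cube_finitely_covered n c t) as [N HN].
{ intros x. destruct (Hcov x Logic.I) as [k Hk]. exists k. intros i. specialize (Hk i).
  unfold t. pose proof (Hs k). pose proof (Hd k).
  unfold Rmax. destruct (Rle_dec (s k) (d k)); lra. }
destruct N as [|N'].
{ destruct (HN (fun _ => 0)) as [k [Hk _]]. intros i; lra. lia. }
destruct (fine_mesh (d (S N')) (proj1 (Hd (S N')))) as [m [Hm1 Hmbig]].
assert (Hmpos : 0 < INR m) by (apply lt_0_INR; lia).
assert (Hcount : (INR m + 1) ^ n <= sum_f_R0 (fun k => (t k * INR m + 1) ^ n) N').
{ apply (unit_cube_count n m N' c t); auto. intros k. unfold t. pose proof (Hd k).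
  unfold Rmax; destruct (Rle_dec _ _); lra. }
assert (Hmesh : forall k, (k <= N')%nat -> 1 <= d k * INR m).
{ intros k Hk. apply Rle_trans with (d (S N') * INR m); [lra|].
  apply Rmult_le_compat_r; [lra|]. unfold d. apply Rmult_le_compat_l; [lra|]. apply half_pow_le. lia. }
assert (Hbound := enlarged_sum_bound n s d (INR m) N' Hs Hd Hn Hmesh).
rewrite Rpow_mult_distr in Hbound. unfold t in Hcount.
assert (HD : sum_f_R0 d N' <= 2 * eps).
{ unfold d. rewrite (sum_eq _ (fun k => (1/2)^k * eps)) by (intros; ring).
  rewrite <- scal_sum. pose proof (geom_half2 N').
  apply Rle_trans with (eps * 2); [apply Rmult_le_compat_l; [lra|exact H] | lra]. }
specialize (Hsum N').
assert (Hmn : INR m ^ n <= (INR m + 1) ^ n) by (apply pow_incr; lra).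
assert (Hmn0 : 0 < INR m ^ n) by (apply pow_lt; lra).
assert (E : 4 ^ n * INR m ^ n * (3 * eps) = 3 / 4 * INR m ^ n) by (unfold eps; field; lra).
assert (Hvol : 4 ^ n * INR m ^ n * (sum_f_R0 (fun k => s k ^ n) N' + sum_f_R0 d N') < 4 ^ n * INR m ^ n * (3 * eps)).
{ apply Rmult_lt_compat_l. apply Rmult_lt_0_compat; auto. lra. }
lra.
Qed.

Lemma rat_approx : forall y rho, 0 < rho -> exists c, Rabs (Q2R (rat_of_code c) - y) < rho.
Proof.
intros y rho Hr.
destruct (INR_unbounded (/ rho)) as [b Hb].
assert (Hb1 : 0 < INR (S b)) by (apply lt_0_INR; lia).
assert (Hbr : / INR (S b) < rho).
{ rewrite S_INR in *. assert (0 < / rho) by (apply Rinv_0_lt_compat; auto).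
  apply (Rmult_lt_reg_l (INR b + 1)); [lra|]. rewrite Rinv_r by lra.
  apply (Rmult_lt_reg_l (/ rho)); auto. rewrite Rmult_1_r. 
  replace (/ rho * ((INR b + 1) * rho)) with (INR b + 1) by (field; lra). lra. }
set (r := y * INR (S b)).
destruct (archimed r) as [H1 H2].
set (z := (up r - 1)%Z).
destruct (rat_of_code_surj (Qmake z (Pos.of_succ_nat b))) as [c Hc].
exists c. rewrite Hc. unfold Q2R. simpl Qnum. simpl Qden.
rewrite Zpos_P_of_succ_nat, <- Nat2Z.inj_succ, <- INR_IZR_INZ.
unfold z. rewrite minus_IZR. simpl (IZR 1).
assert (E : (IZR (up r) - 1) * / INR (S b) - y = (IZR (up r) - 1 - r) / INR (S b)) by (unfold r; field; lra).
rewrite E. unfold Rdiv. rewrite Rabs_mult, (Rabs_right (/ _)) by (left; apply Rinv_0_lt_compat; auto).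
apply Rle_lt_trans with (1 * / INR (S b)); [|lra].
apply Rmult_le_compat_r. left; apply Rinv_0_lt_compat; auto.
unfold Rabs. destruct (Rcase_abs _); lra.
Qed.

Lemma dense_seq (n : nat) : exists d : nat -> pt n, forall x rho, 0 < rho -> exists j, forall i, Rabs (d j i - x i) < rho.
Proof.
destruct Enumeration.code_lists_enumerable as [g Hg].
exists (fun j i => nth (proj1_sig (Fin.to_nat i))
   (map (fun c : bool * nat * nat * nat => let '(s, a, b, _) := c in Q2R (rat_of_code (s, a, b))) (g j)) 0).
intros x rho Hr.
set (y := fun k => match lt_dec k n with left h => x (Fin.of_nat_lt h) | right _ => 0 end).
assert (Hc : forall k, exists c, Rabs (Q2R (rat_of_code c) - y k) < rho) by (intros; apply rat_approx; auto).
set (cf := fun k => epsilon (inhabits (true, 0%nat, 0%nat)) (fun c => Rabs (Q2R (rat_of_code c) - y k) < rho)).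
assert (Hcf : forall k, Rabs (Q2R (rat_of_code (cf k)) - y k) < rho).
{ intros k. apply (epsilon_spec (inhabits (true, 0%nat, 0%nat)) (fun c => Rabs (Q2R (rat_of_code c) - y k) < rho)). apply Hc. }
destruct (Hg (map (fun k => let '(s, a, b) := cf k in (s, a, b, 0%nat)) (seq 0 n))) as [j Hj].
exists j. intros i. rewrite Hj, map_map.
destruct (Fin.to_nat i) as [k Hk] eqn:Ek. simpl proj1_sig.
match goal with |- context [map ?h (seq 0 n)] => set (hh := h) end.
assert (Hnth : nth k (map hh (seq 0 n)) 0 = hh k).
{ rewrite nth_indep with (d' := hh 0%nat); [rewrite map_nth, seq_nth; auto | rewrite length_map, length_seq; auto]. }
rewrite Hnth. unfold hh. simpl.
destruct (cf k) as [[s a] b] eqn:Ec. 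
specialize (Hcf k). rewrite Ec in Hcf.
replace (x i) with (y k); auto.
unfold y. destruct (lt_dec k n) as [h|h]; [|contradiction].
rewrite <- (Fin.of_nat_to_nat_inv i). rewrite Ek. simpl. f_equal. f_equal. apply proof_irrelevance.
Qed.

(* A null set whose complement is meager: W = the points lying, for every m, in
   one of the cubes of centre d j and side 2^-m 2^-(j+1) around a dense
   sequence d.  Each stage has total volume <= 2^-m, and the complement of each
   stage is nowhere dense. *)
Section NullComeager.
Variable n : nat.
Variable d : nat -> pt n.
Hypothesis Hd : forall x rho, 0 < rho -> exists j, forall i, Rabs (d j i - x i) < rho.

Definition side (m j : nat) : R := (1/2)^m * (1/2)^(S j).
Definition W : set_ n := fun x => forall m, exists j, cube (d j) (side m j) x.

Lemma side_pos : forall m j, 0 < side m j.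
Proof. intros. unfold side. apply Rmult_lt_0_compat; apply half_pow_pos. Qed.

Lemma side_le1 : forall m j, side m j <= 1.
Proof.
intros m j. unfold side. pose proof (half_pow_le 0 m (Nat.le_0_l m)). pose proof (half_pow_le 0 (S j) (Nat.le_0_l _)).
pose proof (half_pow_pos m). pose proof (half_pow_pos (S j)). simpl in *. nra.
Qed.

Hypothesis Hn : (1 <= n)%nat.

(* W is null: the stage m cover has total volume <= 2^-m. *)
Lemma W_null : null_set n W.
Proof.
intros eps He. destruct (half_pow_small eps He) as [m Hm].
exists d, (side m). split; [|split].
- intros j. left; apply side_pos.
- intros x Hx. apply Hx.
- intros N. apply Rle_lt_trans with (sum_f_R0 (side m) N).
  + apply sum_Rle. intros j _. apply pow_le_self; auto. split. left; apply side_pos. apply side_le1.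
  + unfold side. rewrite (sum_eq _ (fun j => (1/2)^(S j) * (1/2)^m)) by (intros; ring).
    rewrite <- scal_sum, geom_half. pose proof (half_pow_pos (S N)). pose proof (half_pow_pos m).
    apply Rle_lt_trans with ((1/2)^m * 1); [apply Rmult_le_compat_l; lra | lra].
Qed.

(* The complement of W is meager: the complement of stage m is nowhere dense,
   as every ball contains one of its cubes. *)
Lemma W_compl_meager : meager n (fun x => ~ W x).
Proof.
exists (fun m x => forall j, ~ cube (d j) (side m j) x). split.
- intros m x rho Hr. destruct (Hd x (rho / 2)) as [j Hj]. lra.
  exists (d j), (Rmin (rho / 2) (side m j / 2)). split; [|split].
  + apply Rmin_glb_lt. lra. pose proof (side_pos m j). lra.
  + intros z Hz i. specialize (Hz i). specialize (Hj i). pose proof (Rmin_l (rho/2) (side m j / 2)).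
    replace (z i - x i) with ((z i - d j i) + (d j i - x i)) by ring.
    eapply Rle_lt_trans. apply Rabs_triang. lra.
  + intros z Hz C. apply (C j). intros i. specialize (Hz i). pose proof (Rmin_r (rho/2) (side m j / 2)). lra.
- intros x Hx. apply NNPP. intros C. apply Hx. intros m. apply NNPP. intros C'. apply C. exists m.
  intros j Cj. apply C'. exists j. exact Cj.
Qed.
End NullComeager.

Theorem theorem2p5 (n : nat) (Hn : (1 <= n)%nat) (I J : set_ n -> Prop)
  (HIJ : (I = null_set n /\ J = meager n) \/ (I = meager n /\ J = null_set n))
  (Hcov : covt_ge_cof I) :
  exists H : set_ n, Q_subspace H /\ J H /\ ~ I H.
Proof.
destruct (dense_seq n) as [d Hd].
destruct HIJ as [[-> ->]|[-> ->]].
-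
  apply (subspace_in_J_not_in_I n (null_set n) (null_sub n) (null_cunion n) (null_full n Hn)
    (null_single n Hn) (null_scale n) (meager n) (meager_sub n) (meager_union2 n)
    (meager_single n Hn) (fun x => ~ W n d x) (W_compl_meager n d Hd)); auto.
  apply (null_sub n _ (W n d)); [intros x Hx; apply NNPP, Hx|apply W_null; auto].
-
  apply (subspace_in_J_not_in_I n (meager n) (meager_sub n) (meager_cunion n) (meager_full n)
    (meager_single n Hn) (meager_scale n) (null_set n) (null_sub n) (null_union2 n)
    (null_single n Hn) (W n d) (W_null n d Hn) (W_compl_meager n d Hd) Hcov).
Qed.
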